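(* Consider decorated ideal hyperbolic triangles admitting a point equidistant to their three horocycles. The following correspondence is a bijection between: (i) triples $(\ell_1,\ell_2,\ell_3)\in\mathbb{R}^3$, up to a common additive constant, of signed side lengths of such decorated triangles; (ii) triples $(\lambda_1,\lambda_2,\lambda_3)\in\mathbb{R}_{>0}^3$, up to a common multiplicative constant, satisfying the strict triangle inequalities; (iii) triples of angles $\theta_1,\theta_2,\theta_3\in(0,\pi)$ with $\theta_1+\theta_2+\theta_3=2\pi$. The relations are $$\lambda_i=\sqrt{2e^{\ell_i}},\qquad \frac{\sqrt{e^{\ell_1}}}{\sin\theta_1}=\frac{\sqrt{e^{\ell_2}}}{\sin\theta_2}=\frac{\sqrt{e^{\ell_3}}}{\sin\theta_3}.$$ Moreover the angles $\theta_1,\theta_2,\theta_3$ formed by the three hyperbolic bisectors at the equidistant point $\zeta$ coincide with the angles formed at the circumcenter of the Euclidean triangle with side lengths $\lambda_1,\lambda_2,\lambda_3$ by its three perpendicular bisectors. Finally, for $i=1,2,3$, the signed hyperbolic length of the bisector connecting the $i$th side of the hyperbolic triangle to $\zeta$ (taken negative if $\zeta$ lies outside the triangle beyond that side) equals $\operatorname{arctanh}\cos(\pi-\theta_i)$.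
   Context: A decorated ideal triangle is an ideal hyperbolic triangle with distinct ideal vertices $x_1,x_2,x_3\in\partial\mathbb{H}$ and a horocycle centered at each ideal vertex. For side $i$, $\ell_i$ is the signed hyperbolic distance along side $i$ between the horocycles at its two endpoints (negative if these horocycles intersect). The bisector of side $i$ is the locus of points equidistant to the two horocycles at the endpoints of side $i$; it is a geodesic orthogonal to side $i$. When there is a point $\zeta$ equidistant from the three horocycles, the three bisectors meet at $\zeta$; the rays from $\zeta$ along the bisectors towards the three sides split the full angle at $\zeta$ into three sectors, and $\theta_i$ is the angle of the sector bounded by the rays towards the two sides other than side $i$. The same definitions apply to a Euclidean triangle with side lengths $\lambda_i$, its circumcenter, and the rays from the circumcenter towards the sides along the perpendicular bisectors. *)

(* concrete real numbers R.
   Hyperbolic plane = hyperboloid model in Minkowski space R^{1,2}. *)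
From Stdlib Require Import Reals Lra.
Open Scope R_scope.

Record V3 := mkV3 { c0 : R; c1 : R; c2 : R }.

Definition vadd (u v : V3) : V3 := mkV3 (c0 u + c0 v) (c1 u + c1 v) (c2 u + c2 v).
Definition vscale (a : R) (v : V3) : V3 := mkV3 (a * c0 v) (a * c1 v) (a * c2 v).
Definition vsub (u v : V3) : V3 := vadd u (vscale (-1) v).

Definition mink (u v : V3) : R := - c0 u * c0 v + c1 u * c1 v + c2 u * c2 v.

(* Euclidean 3x3 determinant det(u,v,w) (rows u, v, w); used for orientation /
   sides of planes through the origin. *)
Definition det3 (u v w : V3) : R :=
  c0 u * (c1 v * c2 w - c2 v * c1 w)
  - c1 u * (c0 v * c2 w - c2 v * c0 w)
  + c2 u * (c0 v * c1 w - c1 v * c0 w).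

Definition hpoint (X : V3) : Prop := mink X X = -1 /\ 0 < c0 X.

Definition arcosh (t : R) : R := ln (t + sqrt (t * t - 1)).
Definition artanh (x : R) : R := ln ((1 + x) / (1 - x)) / 2.

Definition hdist (X Y : V3) : R := arcosh (- mink X Y).

(* A decorated ideal point (ideal point + horocycle centered at it) is a
   future light-like vector L; its ideal point is the ray R_{>0} L of the
   light cone, its horocycle is {X in H | <X,L> = -1}, and its horoball is
   {X in H | -<X,L> < 1}. *)
Definition lightlike (L : V3) : Prop := mink L L = 0 /\ 0 < c0 L.
Definition on_horo (X L : V3) : Prop := mink X L = -1.
Definition in_horoball (X L : V3) : Prop := - mink X L < 1.

(* signed distance from a point X of H to the horocycle of L
   (negative iff X lies inside the horoball) *)
Definition hsd (X L : V3) : R := ln (- mink X L).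

Definition distinct_ideal (L M : V3) : Prop := ~ (exists c, 0 < c /\ M = vscale c L).

Definition dec_triangle (L1 L2 L3 : V3) : Prop :=
  lightlike L1 /\ lightlike L2 /\ lightlike L3 /\
  distinct_ideal L1 L2 /\ distinct_ideal L2 L3 /\ distinct_ideal L3 L1.

Definition on_side (X Lj Lk : V3) : Prop :=
  hpoint X /\ exists a b, 0 < a /\ 0 < b /\ X = vadd (vscale a Lj) (vscale b Lk).

(* X and the ideal vertex [Li] lie strictly on opposite sides of the geodesic
   through [Lj], [Lk] ("X is beyond that side") *)
Definition beyond_side (X Li Lj Lk : V3) : Prop :=
  det3 Lj Lk X * det3 Lj Lk Li < 0.

(* signed length of the side with endpoints [Lj],[Lk]: signed distance along
   the side between the two horocycles (negative if they intersect) *)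
Definition side_len (Lj Lk : V3) (l : R) : Prop :=
  exists Pj Pk,
    on_side Pj Lj Lk /\ on_side Pk Lj Lk /\ on_horo Pj Lj /\ on_horo Pk Lk /\
    l = (if Rlt_dec (- mink Pj Lk) 1 then - hdist Pj Pk else hdist Pj Pk).

Definition equidistant (Z L1 L2 L3 : V3) : Prop :=
  hpoint Z /\ hsd Z L1 = hsd Z L2 /\ hsd Z L2 = hsd Z L3.

Definition on_bisector (X Lj Lk : V3) : Prop := hpoint X /\ hsd X Lj = hsd X Lk.

Definition georay (Z v : V3) (t : R) : V3 := vadd (vscale (cosh t) Z) (vscale (sinh t) v).

Definition unit_tangent (Z v : V3) : Prop := mink v Z = 0 /\ mink v v = 1.

(* v is the unit direction at Z of the ray from Z along the bisector of the side
   opposite [Li] (side [Lj][Lk]) going towards/across that side, i.e. the ray lies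
   in the bisector and eventually lies beyond the side (outward orientation). *)
Definition hray (Z Li Lj Lk v : V3) : Prop :=
  unit_tangent Z v /\
  (forall t, 0 <= t -> on_bisector (georay Z v t) Lj Lk) /\
  (exists T, forall t, T <= t -> beyond_side (georay Z v t) Li Lj Lk).

(* counterclockwise angle in [0, 2 pi) from unit tangent v to unit tangent w at Z
   (tangent plane at Z oriented by det3 Z . .) *)
Definition hccw (Z v w : V3) : R :=
  if Rle_dec 0 (det3 Z v w) then acos (mink v w) else 2 * PI - acos (mink v w).

(* the angle of the sector bounded by the rays vj, vk and not containing ray vi,
   (rays given by unit tangents at Z) *)

Definition hsector (Z vi vj vk : V3) : R :=
  if Rlt_dec (hccw Z vj vi) (hccw Z vj vk) then 2 * PI - hccw Z vj vk else hccw Z vj vk.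

(* signed length of the bisector from the side opposite [Li] to Z:
   distance from Z to the foot F (intersection of bisector and side),
   negative iff Z is beyond that side *)
Definition bis_len (Z Li Lj Lk : V3) (s : R) : Prop :=
  exists F, on_side F Lj Lk /\ on_bisector F Lj Lk /\
    s = (if Rlt_dec (det3 Lj Lk Z * det3 Lj Lk Li) 0 then - hdist Z F else hdist Z F).

Definition pt2 := (R * R)%type.
Definition padd (p q : pt2) : pt2 := (fst p + fst q, snd p + snd q).
Definition pscale (a : R) (p : pt2) : pt2 := (a * fst p, a * snd p).
Definition edot (p q : pt2) : R := fst p * fst q + snd p * snd q.
Definition ecross (p q : pt2) : R := fst p * snd q - snd p * fst q.
Definition psub (p q : pt2) : pt2 := (fst p - fst q, snd p - snd q).
Definition edist (p q : pt2) : R := sqrt (edot (psub p q) (psub p q)).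

Definition orient (a b c : pt2) : R := ecross (psub b a) (psub c a).

(* triangle with side lengths m1 = |P2 P3|, m2 = |P3 P1|, m3 = |P1 P2| *)
Definition eucl_triangle (A B C : pt2) (m1 m2 m3 : R) : Prop :=
  edist B C = m1 /\ edist C A = m2 /\ edist A B = m3.

Definition circumcenter (O A B C : pt2) : Prop :=
  edist O A = edist O B /\ edist O B = edist O C.

(* u is the unit direction of the ray from O along the perpendicular bisector of
   the side Pj Pk (opposite Pi) going towards/across that side (outward orientation):
   the ray lies in the perpendicular bisector and eventually lies strictly on the
   other side of line Pj Pk from Pi *)
Definition eray (O Pi Pj Pk u : pt2) : Prop :=
  edot u u = 1 /\
  (forall t, 0 <= t -> edist (padd O (pscale t u)) Pj = edist (padd O (pscale t u)) Pk) /\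
  (exists T, forall t, T <= t -> orient Pj Pk (padd O (pscale t u)) * orient Pj Pk Pi < 0).

Definition eccw (u w : pt2) : R :=
  if Rle_dec 0 (ecross u w) then acos (edot u w) else 2 * PI - acos (edot u w).

Definition esector (ui uj uk : pt2) : R :=
  if Rlt_dec (eccw uj ui) (eccw uj uk) then 2 * PI - eccw uj uk else eccw uj uk.

(* (i) signed side lengths of decorated ideal triangles admitting an equidistant point;
   side i is the side opposite vertex i *)
Definition realizable (l1 l2 l3 : R) : Prop :=
  exists L1 L2 L3 Z, dec_triangle L1 L2 L3 /\ equidistant Z L1 L2 L3 /\
    side_len L2 L3 l1 /\ side_len L3 L1 l2 /\ side_len L1 L2 l3.

Definition tri_ineq (m1 m2 m3 : R) : Prop :=
  0 < m1 /\ 0 < m2 /\ 0 < m3 /\ m1 < m2 + m3 /\ m2 < m3 + m1 /\ m3 < m1 + m2.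

Definition angle_triple (t1 t2 t3 : R) : Prop :=
  0 < t1 < PI /\ 0 < t2 < PI /\ 0 < t3 < PI /\ t1 + t2 + t3 = 2 * PI.

Definition sine_rel (l1 l2 l3 t1 t2 t3 : R) : Prop :=
  sqrt (exp l1) / sin t1 = sqrt (exp l2) / sin t2 /\
  sqrt (exp l2) / sin t2 = sqrt (exp l3) / sin t3.

Definition lam (l : R) : R := sqrt (2 * exp l).

(* In the hyperboloid model a decorated ideal triangle is a triple of future light-like
   vectors [L_i] with [ℓ_i = ln (-<L_j, L_k> / 2)], i.e. [λ_i^2 = -<L_j, L_k>], and [Z] is
   equidistant from the three horocycles iff [<Z, L_i> = -r] for a common [r]. Four vectors
   of a 3-space have vanishing Gram determinant; for [Z, L_1, L_2, L_3] this reads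
   [r^2 H(λ) = 2 (λ_1 λ_2 λ_3)^2] with [H] Heron's polynomial, so the [λ_i] satisfy the strict
   triangle inequalities. Conversely, lifting the circumcircle of a Euclidean triangle with
   sides [λ_i] to the light cone produces such a configuration.
   At [Z] the unit tangent to the bisector of side [i] is [± Z × (L_k - L_j) / (√2 λ_i)]
   (Lorentzian cross product); two of them have inner product [-cos α_i], with [α_i] the
   Euclidean angle opposite side [i], exactly like the unit normals to the sides at the
   circumcenter. Hence [θ_i = π - α_i] in both pictures, and the law of sines gives the
   relation with [e^{ℓ_i / 2}]. Finally the foot of the bisector is [(L_j + L_k) / (√2 λ_i)],
   at distance [arcosh (√2 r / λ_i)] from [Z], which the Gram relation turns into
   [artanh (cos α_i)]. *)

From Stdlib Require Import Reals Lra Psatz.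
Open Scope R_scope.

(** * Minkowski space *)

Lemma mink_sym u v : mink u v = mink v u.
Proof. unfold mink; ring. Qed.

Lemma mink_vadd_l u v w : mink (vadd u v) w = mink u w + mink v w.
Proof. unfold mink, vadd; simpl; ring. Qed.

Lemma mink_vadd_r u v w : mink w (vadd u v) = mink w u + mink w v.
Proof. unfold mink, vadd; simpl; ring. Qed.

Lemma mink_vscale_l a u w : mink (vscale a u) w = a * mink u w.
Proof. unfold mink, vscale; simpl; ring. Qed.

Lemma mink_vscale_r a u w : mink w (vscale a u) = a * mink w u.
Proof. unfold mink, vscale; simpl; ring. Qed.

Lemma mink_vsub_l u v w : mink (vsub u v) w = mink u w - mink v w.
Proof. unfold mink, vsub, vadd, vscale; simpl; ring. Qed.

Lemma mink_vsub_r u v w : mink w (vsub u v) = mink w u - mink w v.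
Proof. unfold mink, vsub, vadd, vscale; simpl; ring. Qed.

Definition mcross (a b : V3) : V3 :=
  mkV3 (- (c1 a * c2 b - c2 a * c1 b)) (c2 a * c0 b - c0 a * c2 b) (c0 a * c1 b - c1 a * c0 b).

Lemma mink_mcross a b c : mink (mcross a b) c = det3 a b c.
Proof. unfold mink, mcross, det3; simpl; ring. Qed.

Lemma mink_mcross_mcross a b c d :
  mink (mcross a b) (mcross c d) = mink a d * mink b c - mink a c * mink b d.
Proof. unfold mink, mcross; simpl; ring. Qed.

Lemma mink_mcross_self a b : mink (mcross a b) a = 0.
Proof. unfold mink, mcross; simpl; ring. Qed.

Lemma det3_cycle a b c : det3 a b c = det3 b c a.
Proof. unfold det3; ring. Qed.

(* The Gram determinant, with a minus sign since the form has determinant [-1]. *)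
Lemma det3_mul_det3 x y z p q s : det3 x y z * det3 p q s =
  - (mink x p * (mink y q * mink z s - mink y s * mink z q)
     - mink x q * (mink y p * mink z s - mink y s * mink z p)
     + mink x s * (mink y p * mink z q - mink y q * mink z p)).
Proof. unfold det3, mink; ring. Qed.

Lemma det3_cramer a b c x : vscale (det3 a b c) x =
  vadd (vadd (vscale (det3 x b c) a) (vscale (det3 a x c) b)) (vscale (det3 a b x) c).
Proof. destruct a, b, c, x; unfold vscale, vadd, det3; simpl; f_equal; ring. Qed.

Ltac mink_expand :=
  repeat (rewrite mink_vadd_l || rewrite mink_vadd_r || rewrite mink_vsub_l
          || rewrite mink_vsub_r || rewrite mink_vscale_l || rewrite mink_vscale_r
          || rewrite mink_mcross_mcross).

Ltac gram :=
  repeat match goal with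
  | E : mink ?a ?b = _ |- context [mink ?a ?b] => rewrite E
  | E : mink ?a ?b = _ |- context [mink ?b ?a] => rewrite (mink_sym b a), E
  end.

(* Lagrange's identity for the Minkowski form; it gives the reverse Cauchy-Schwarz
   inequalities below. *)
Lemma mink_lagrange u v :
  c0 u ^ 2 * mink v v + c0 v ^ 2 * mink u u - 2 * c0 u * c0 v * mink u v =
  (c0 u * c1 v - c0 v * c1 u) ^ 2 + (c0 u * c2 v - c0 v * c2 u) ^ 2.
Proof. unfold mink; ring. Qed.

Lemma mink_hpoint_lightlike Z L : hpoint Z -> lightlike L -> mink Z L < 0.
Proof.
  intros [HZ HZ0] [HL HL0]. pose proof (mink_lagrange Z L) as E. rewrite HZ, HL in E.
  pose proof (pow2_ge_0 (c0 Z * c1 L - c0 L * c1 Z)).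
  pose proof (pow2_ge_0 (c0 Z * c2 L - c0 L * c2 Z)).
  assert (0 < c0 Z * c0 L) by nra. nra.
Qed.

Lemma hpoint_of_mink X Z : mink X X = -1 -> hpoint Z -> mink X Z < 0 -> hpoint X.
Proof.
  intros HX [HZ HZ0] HXZ. split; [exact HX|].
  pose proof (mink_lagrange X Z) as E. rewrite HX, HZ in E.
  pose proof (pow2_ge_0 (c0 X * c1 Z - c0 Z * c1 X)).
  pose proof (pow2_ge_0 (c0 X * c2 Z - c0 Z * c2 X)).
  assert (0 < c0 X * (c0 Z * - mink X Z)) by nra.
  assert (0 < c0 Z * - mink X Z) by (apply Rmult_lt_0_compat; lra).
  nra.
Qed.

Lemma mink_lightlike L M : lightlike L -> lightlike M -> distinct_ideal L M -> mink L M < 0.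
Proof.
  intros [HL HL0] [HM HM0] Hd. pose proof (mink_lagrange L M) as E. rewrite HL, HM in E.
  destruct (Rlt_or_le (mink L M) 0) as [Hlt|Hge]; [exact Hlt|]. exfalso.
  pose proof (pow2_ge_0 (c0 L * c1 M - c0 M * c1 L)).
  pose proof (pow2_ge_0 (c0 L * c2 M - c0 M * c2 L)).
  assert (0 < c0 L * c0 M) by nra.
  assert (E1 : c0 L * c1 M - c0 M * c1 L = 0) by (apply Rsqr_0_uniq; unfold Rsqr; nra).
  assert (E2 : c0 L * c2 M - c0 M * c2 L = 0) by (apply Rsqr_0_uniq; unfold Rsqr; nra).
  apply Hd. exists (c0 M / c0 L). split; [apply Rdiv_lt_0_compat; lra|].
  destruct L, M; unfold vscale; simpl in *. f_equal; field_simplify_eq; lra.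
Qed.

Lemma distinct_ideal_of_mink L M : lightlike L -> mink L M <> 0 -> distinct_ideal L M.
Proof. intros [HL _] Hm [c [_ ->]]. apply Hm. rewrite mink_vscale_r, HL. ring. Qed.

(** * Distances to horocycles and side lengths *)

Lemma arcosh_cosh_ln x : 1 <= x -> arcosh ((x + / x) / 2) = ln x.
Proof.
  intro Hx. assert (/ x <= 1) by (rewrite <- Rinv_1; apply Rinv_le_contravar; lra).
  unfold arcosh.
  replace ((x + / x) / 2 * ((x + / x) / 2) - 1) with ((x - / x) / 2 * ((x - / x) / 2))
    by (field; lra).
  rewrite sqrt_square by lra. f_equal. field. lra.
Qed.

Lemma signed_arcosh x : 0 < x ->
  (if Rlt_dec x 1 then - arcosh ((x + / x) / 2) else arcosh ((x + / x) / 2)) = ln x.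
Proof.
  intro Hx. destruct (Rlt_dec x 1) as [H|H].
  - assert (1 <= / x) by (rewrite <- Rinv_1; apply Rinv_le_contravar; lra).
    replace (x + / x) with (/ x + / / x) by (rewrite Rinv_inv; ring).
    rewrite arcosh_cosh_ln, ln_Rinv by lra. ring.
  - apply arcosh_cosh_ln. lra.
Qed.

Lemma arcosh_artanh x y : 0 <= x < 1 -> 0 < y -> y * y * (1 - x * x) = 1 ->
  arcosh y = artanh x.
Proof.
  intros Hx Hy E. unfold arcosh, artanh.
  replace (y * y - 1) with (x * y * (x * y)) by nra.
  rewrite sqrt_square by nra.
  replace ((1 + x) / (1 - x)) with ((y + x * y) * (y + x * y)).
  - rewrite ln_mult by nra. field.
  - apply Rmult_eq_reg_r with (1 - x * x); [|nra].
    replace ((y + x * y) * (y + x * y) * (1 - x * x))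
      with ((1 + x) * (1 + x) * (y * y * (1 - x * x))) by ring.
    rewrite E. field. lra.
Qed.

Lemma artanh_opp x : -1 < x < 1 -> artanh (- x) = - artanh x.
Proof.
  intro Hx. unfold artanh.
  replace ((1 + - x) / (1 - - x)) with (/ ((1 + x) / (1 - x))) by (field; lra).
  rewrite ln_Rinv by (apply Rdiv_lt_0_compat; lra). field.
Qed.

Lemma signed_arcosh_artanh x y c : -1 < x < 1 -> 0 < y -> y * y * (1 - x * x) = 1 ->
  (c < 0 <-> x < 0) -> (if Rlt_dec c 0 then - arcosh y else arcosh y) = artanh x.
Proof.
  intros Hx Hy E Hc. destruct (Rlt_dec c 0) as [H|H].
  - apply Hc in H. rewrite <- (Ropp_involutive x), artanh_opp by lra. f_equal.
    apply arcosh_artanh; [lra|lra|]. replace (- x * - x) with (x * x) by ring. exact E.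
  - apply arcosh_artanh; [|lra|exact E]. split; [|lra].
    destruct (Rle_or_lt 0 x) as [?|Hlt]; [assumption|]. apply Hc in Hlt. lra.
Qed.

Lemma hpoint_vadd a b Lj Lk : lightlike Lj -> lightlike Lk -> 0 < a -> 0 < b ->
  2 * a * b * mink Lj Lk = -1 -> hpoint (vadd (vscale a Lj) (vscale b Lk)).
Proof.
  intros [Hj Hj0] [Hk Hk0] Ha Hb E. split.
  - mink_expand. rewrite Hj, Hk, (mink_sym Lk Lj). lra.
  - simpl. nra.
Qed.

Lemma on_side_sym P Lj Lk : on_side P Lj Lk -> on_side P Lk Lj.
Proof.
  intros [HP [a [b (Ha & Hb & ->)]]]. split; [exact HP|].
  exists b, a. split; [exact Hb|split; [exact Ha|]].
  unfold vadd; simpl. f_equal; ring.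
Qed.

(* Where the horocycle of [Lj] meets the geodesic [Lj Lk]. *)
Definition horo_foot (Lj Lk : V3) : V3 := vadd (vscale (/ 2) Lj) (vscale (/ - mink Lj Lk) Lk).

Lemma on_side_horo P Lj Lk : lightlike Lj -> lightlike Lk -> on_side P Lj Lk -> on_horo P Lj ->
  P = horo_foot Lj Lk.
Proof.
  intros [Hj _] [Hk _] [[HP _] [a [b (Ha & Hb & ->)]]]. revert HP. unfold on_horo.
  mink_expand. rewrite Hj, Hk, (mink_sym Lk Lj). intros HP Hh.
  assert (Eb : b = / - mink Lj Lk) by (field_simplify_eq; nra).
  assert (Ea : a = / 2) by (field_simplify_eq; nra).
  rewrite Ea, Eb. reflexivity.
Qed.

Lemma horo_foot_spec Lj Lk : lightlike Lj -> lightlike Lk -> mink Lj Lk < 0 ->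
  on_side (horo_foot Lj Lk) Lj Lk /\ on_horo (horo_foot Lj Lk) Lj.
Proof.
  intros HLj HLk Hm. pose proof HLj as [Hj _].
  assert (0 < / - mink Lj Lk) by (apply Rinv_0_lt_compat; lra).
  split; [split|].
  - apply hpoint_vadd; auto; [lra|field; lra].
  - exists (/ 2), (/ - mink Lj Lk). repeat split; lra.
  - unfold on_horo, horo_foot. mink_expand. rewrite Hj, (mink_sym Lk Lj). field. lra.
Qed.

Lemma horo_foot_signed_dist Lj Lk : lightlike Lj -> lightlike Lk -> mink Lj Lk < 0 ->
  (if Rlt_dec (- mink (horo_foot Lj Lk) Lk) 1
   then - hdist (horo_foot Lj Lk) (horo_foot Lk Lj)
   else hdist (horo_foot Lj Lk) (horo_foot Lk Lj)) =
  ln (- mink Lj Lk / 2).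
Proof.
  intros [Hj _] [Hk _] Hm. unfold hdist, horo_foot. rewrite (mink_sym Lk Lj).
  set (m := - mink Lj Lk) in *. assert (Hjk : mink Lj Lk = - m) by (unfold m; ring).
  replace (- mink (vadd (vscale (/ 2) Lj) (vscale (/ m) Lk)) Lk) with (m / 2)
    by (mink_expand; rewrite Hk, Hjk; field; lra).
  replace (- mink (vadd (vscale (/ 2) Lj) (vscale (/ m) Lk))
                   (vadd (vscale (/ 2) Lk) (vscale (/ m) Lj)))
    with ((m / 2 + / (m / 2)) / 2)
    by (mink_expand; rewrite Hj, Hk, (mink_sym Lk Lj), Hjk; field; lra).
  apply signed_arcosh. lra.
Qed.

Lemma side_len_iff Lj Lk l : lightlike Lj -> lightlike Lk -> mink Lj Lk < 0 ->
  side_len Lj Lk l <-> l = ln (- mink Lj Lk / 2).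
Proof.
  intros HLj HLk Hm.
  assert (Hm' : mink Lk Lj < 0) by (rewrite mink_sym; exact Hm).
  split.
  - intros (Pj & Pk & HPj & HPk & Hj & Hk & ->).
    rewrite (on_side_horo Pj Lj Lk), (on_side_horo Pk Lk Lj) by auto using on_side_sym.
    apply horo_foot_signed_dist; assumption.
  - intros ->. destruct (horo_foot_spec Lj Lk) as [Sj Hj]; try assumption.
    destruct (horo_foot_spec Lk Lj) as [Sk Hk]; try assumption.
    exists (horo_foot Lj Lk), (horo_foot Lk Lj). do 4 (split; auto using on_side_sym).
    symmetry. apply horo_foot_signed_dist; assumption.
Qed.

Lemma lam_pos l : 0 < lam l.
Proof. apply sqrt_lt_R0. pose proof (exp_pos l). lra. Qed.

Lemma sqrt_exp_lam l : sqrt (exp l) = lam l / sqrt 2.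
Proof.
  unfold lam. rewrite sqrt_mult by (pose proof (exp_pos l); lra).
  field. apply Rgt_not_eq, sqrt_lt_R0. lra.
Qed.

Lemma lam_ln_sq_half m : 0 < m -> lam (ln (m * m / 2)) = m.
Proof.
  intro Hm. unfold lam. rewrite exp_ln by nra.
  replace (2 * (m * m / 2)) with (m * m) by field. apply sqrt_square. lra.
Qed.

Lemma side_len_lam Lj Lk l : lightlike Lj -> lightlike Lk -> mink Lj Lk < 0 ->
  side_len Lj Lk l <-> mink Lj Lk = - (lam l * lam l).
Proof.
  intros HLj HLk Hm. rewrite side_len_iff by assumption.
  unfold lam. rewrite sqrt_sqrt by (pose proof (exp_pos l); lra). split.
  - intros ->. rewrite exp_ln by lra. field.
  - intros ->. replace (- - (2 * exp l) / 2) with (exp l) by field. rewrite ln_exp. reflexivity.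
Qed.

(** * Triangle trigonometry *)

Definition cos_angle (a b c : R) : R := (b * b + c * c - a * a) / (2 * b * c).

(* Sixteen times the squared area (Heron). *)
Definition heron (a b c : R) : R := (a + b + c) * (- a + b + c) * (a - b + c) * (a + b - c).

(* The paper's [θ_i = π - α_i], [α_i] the angle opposite side [i]. *)
Definition sector_angle (a b c : R) : R := PI - acos (cos_angle a b c).

Lemma tri_ineq_rot a b c : tri_ineq a b c -> tri_ineq b c a.
Proof. unfold tri_ineq; lra. Qed.

Lemma heron_rot a b c : heron b c a = heron a b c.
Proof. unfold heron; ring. Qed.

Lemma heron_eq a b c : heron a b c = 4 * (b * c) ^ 2 - (b * b + c * c - a * a) ^ 2.
Proof. unfold heron; ring. Qed.

Lemma heron_pos a b c : tri_ineq a b c -> 0 < heron a b c.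
Proof.
  unfold tri_ineq, heron; intros (? & ? & ? & ? & ? & ?).
  repeat apply Rmult_lt_0_compat; lra.
Qed.

Lemma tri_ineq_of_heron a b c : 0 < a -> 0 < b -> 0 < c -> 0 < heron a b c -> tri_ineq a b c.
Proof.
  unfold heron, tri_ineq. intros Ha Hb Hc H.
  assert (H' : 0 < (- a + b + c) * ((a - b + c) * (a + b - c))).
  { apply Rmult_lt_reg_l with (a + b + c); [lra|]. rewrite Rmult_0_r.
    rewrite <- !Rmult_assoc. exact H. }
  repeat split; try assumption.
  - destruct (Rlt_or_le a (b + c)) as [?|?]; [assumption|].
    assert (0 <= (a - b + c) * (a + b - c)) by nra. nra.
  - destruct (Rlt_or_le b (c + a)) as [?|?]; [assumption|].
    assert (0 <= (- a + b + c) * (a + b - c)) by nra. nra.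
  - destruct (Rlt_or_le c (a + b)) as [?|?]; [assumption|].
    assert (0 <= (- a + b + c) * (a - b + c)) by nra. nra.
Qed.

Lemma one_sub_cos_angle_sq a b c : 0 < b -> 0 < c ->
  1 - cos_angle a b c ^ 2 = heron a b c / (4 * (b * c) ^ 2).
Proof. intros. rewrite heron_eq. unfold cos_angle. field. lra. Qed.

Lemma cos_angle_bound a b c : tri_ineq a b c -> -1 < cos_angle a b c < 1.
Proof.
  intro T. pose proof (heron_pos _ _ _ T) as H. destruct T as (? & ? & ? & _).
  pose proof (one_sub_cos_angle_sq a b c ltac:(lra) ltac:(lra)) as E.
  assert (0 < heron a b c / (4 * (b * c) ^ 2)).
  { apply Rdiv_lt_0_compat; [lra|]. assert (0 < b * c) by nra. nra. }
  split; nra.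
Qed.

Lemma sin_acos_cos_angle a b c : tri_ineq a b c ->
  sin (acos (cos_angle a b c)) = sqrt (heron a b c) / (2 * b * c).
Proof.
  intro T. pose proof (cos_angle_bound _ _ _ T) as B. pose proof (heron_pos _ _ _ T).
  destruct T as (? & ? & ? & _).
  rewrite sin_acos by lra. unfold Rsqr.
  replace (1 - cos_angle a b c * cos_angle a b c) with (1 - cos_angle a b c ^ 2) by ring.
  rewrite one_sub_cos_angle_sq by lra.
  replace (4 * (b * c) ^ 2) with ((2 * b * c) * (2 * b * c)) by ring.
  assert (0 < 2 * b * c) by (repeat apply Rmult_lt_0_compat; lra).
  rewrite sqrt_div_alt, sqrt_square by nra. reflexivity.
Qed.

Lemma acos_add_lt_PI x y : -1 <= x <= 1 -> -1 <= y <= 1 -> 0 < x + y -> acos x + acos y < PI.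
Proof.
  intros Hx Hy Hxy. pose proof (acos_bound x). pose proof (acos_bound y).
  destruct (Rlt_or_le (acos x + acos y) PI) as [?|Hge]; [assumption|]. exfalso.
  assert (Hle : cos (acos x) <= cos (PI - acos y)).
  { destruct (Req_dec (acos x) (PI - acos y)) as [->|Hne]; [lra|].
    left. apply cos_decreasing_1; lra. }
  rewrite Rtrigo_facts.cos_pi_minus, !cos_acos in Hle by assumption. lra.
Qed.

Lemma cos_angle_add_pos a b c : tri_ineq a b c -> 0 < cos_angle a b c + cos_angle b c a.
Proof.
  intros (Ha & Hb & Hc & Hab & Hbc & Hca). unfold cos_angle.
  replace ((b * b + c * c - a * a) / (2 * b * c) + (c * c + a * a - b * b) / (2 * c * a))
    with ((a + b) * ((c - a + b) * (c + a - b)) / (2 * a * b * c)) by (field; lra).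
  apply Rdiv_lt_0_compat; [|repeat apply Rmult_lt_0_compat; lra].
  repeat apply Rmult_lt_0_compat; lra.
Qed.

Lemma acos_cos_angle_sum a b c : tri_ineq a b c ->
  acos (cos_angle a b c) + acos (cos_angle b c a) + acos (cos_angle c a b) = PI.
Proof.
  intro T. pose proof (tri_ineq_rot _ _ _ T) as T'.
  pose proof (cos_angle_bound _ _ _ T) as Ba. pose proof (cos_angle_bound _ _ _ T') as Bb.
  pose proof (acos_add_lt_PI (cos_angle a b c) (cos_angle b c a) ltac:(lra) ltac:(lra)
                (cos_angle_add_pos _ _ _ T)).
  pose proof (acos_bound (cos_angle a b c)). pose proof (acos_bound (cos_angle b c a)).
  assert (Hcos : cos (acos (cos_angle a b c) + acos (cos_angle b c a)) = - cos_angle c a b).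
  { pose proof (heron_pos _ _ _ T). pose proof T as (Ha & Hb & Hc & _).
    rewrite cos_plus, !cos_acos, (sin_acos_cos_angle _ _ _ T), (sin_acos_cos_angle _ _ _ T'),
      (heron_rot a b c) by lra.
    replace (sqrt (heron a b c) / (2 * b * c) * (sqrt (heron a b c) / (2 * c * a)))
      with (sqrt (heron a b c) * sqrt (heron a b c) / (4 * a * b * c * c)) by (field; lra).
    rewrite sqrt_sqrt by lra. unfold cos_angle, heron. field. lra. }
  rewrite <- (acos_cos (acos (cos_angle a b c) + acos (cos_angle b c a))), Hcos, acos_opp by lra.
  ring.
Qed.

Lemma cos_angle_of_sines a b c al be ga k : 0 < a -> 0 < b -> 0 < c -> al + be + ga = PI ->
  k <> 0 -> sin al = k * a -> sin be = k * b -> sin ga = k * c -> cos al = cos_angle a b c.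
Proof.
  intros Ha Hb Hc Hsum Hk Sa Sb Sc.
  (* projection formulas: [a = b cos γ + c cos β], from [sin α = sin (β + γ)] *)
  assert (Proj : forall x y z al be ga, al + be + ga = PI -> sin al = k * x -> sin be = k * y ->
            sin ga = k * z -> x = y * cos ga + z * cos be).
  { intros x y z al' be' ga' Hs Sx Sy Sz.
    assert (E : sin al' = sin (be' + ga')) by (rewrite <- sin_PI_x; f_equal; lra).
    rewrite sin_plus, Sx, Sy, Sz in E.
    apply Rmult_eq_reg_l with k; [|exact Hk]. rewrite E. ring. }
  pose proof (Proj a b c al be ga Hsum Sa Sb Sc) as Pa.
  pose proof (Proj b c a be ga al ltac:(lra) Sb Sc Sa) as Pb.
  pose proof (Proj c a b ga al be ltac:(lra) Sc Sa Sb) as Pc.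
  assert (E : b * b + c * c - a * a = 2 * b * c * cos al).
  { transitivity (b * (c * cos al + a * cos ga) + c * (a * cos be + b * cos al)
                  - a * (b * cos ga + c * cos be)).
    - rewrite <- Pa, <- Pb, <- Pc. reflexivity.
    - ring. }
  unfold cos_angle. rewrite E. field. lra.
Qed.

(** * Angle triples *)

Lemma sin_sector_angle a b c : tri_ineq a b c ->
  sin (sector_angle a b c) = sqrt (heron a b c) / (2 * b * c).
Proof. intro T. unfold sector_angle. rewrite sin_PI_x. exact (sin_acos_cos_angle _ _ _ T). Qed.

Lemma angle_triple_sector_angle a b c : tri_ineq a b c ->
  angle_triple (sector_angle a b c) (sector_angle b c a) (sector_angle c a b).
Proof.
  intro T. pose proof (acos_cos_angle_sum _ _ _ T).
  pose proof (acos_bound_lt _ (cos_angle_bound _ _ _ T)).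
  pose proof (acos_bound_lt _ (cos_angle_bound _ _ _ (tri_ineq_rot _ _ _ T))).
  pose proof (acos_bound_lt _ (cos_angle_bound _ _ _ (tri_ineq_rot _ _ _ (tri_ineq_rot _ _ _ T)))).
  unfold angle_triple, sector_angle. lra.
Qed.

Lemma sine_rel_sector_angle l1 l2 l3 : tri_ineq (lam l1) (lam l2) (lam l3) ->
  sine_rel l1 l2 l3 (sector_angle (lam l1) (lam l2) (lam l3))
    (sector_angle (lam l2) (lam l3) (lam l1)) (sector_angle (lam l3) (lam l1) (lam l2)).
Proof.
  intro T. pose proof (tri_ineq_rot _ _ _ T) as T'. pose proof (tri_ineq_rot _ _ _ T') as T''.
  pose proof (heron_pos _ _ _ T) as HH. pose proof (sqrt_lt_R0 _ HH).
  unfold sine_rel.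
  rewrite (sin_sector_angle _ _ _ T), (sin_sector_angle _ _ _ T'), (sin_sector_angle _ _ _ T'').
  rewrite (heron_rot (lam l2)), !(heron_rot (lam l1)), !sqrt_exp_lam.
  assert (0 < sqrt 2) by (apply sqrt_lt_R0; lra).
  destruct T as (? & ? & ? & _). split; field; repeat split; lra.
Qed.

Lemma sine_rel_proportional l1 l2 l3 t1 t2 t3 : angle_triple t1 t2 t3 ->
  sine_rel l1 l2 l3 t1 t2 t3 ->
  exists k, 0 < k /\ sin t1 = k * sqrt (exp l1) /\ sin t2 = k * sqrt (exp l2) /\
    sin t3 = k * sqrt (exp l3).
Proof.
  intros (A1 & A2 & A3 & _) [E12 E23]. rewrite <- E12 in E23.
  pose proof (sin_gt_0 _ (proj1 A1) (proj2 A1)). pose proof (sin_gt_0 _ (proj1 A2) (proj2 A2)).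
  pose proof (sin_gt_0 _ (proj1 A3) (proj2 A3)).
  pose proof (sqrt_lt_R0 _ (exp_pos l1)). pose proof (sqrt_lt_R0 _ (exp_pos l2)).
  pose proof (sqrt_lt_R0 _ (exp_pos l3)).
  set (s1 := sqrt (exp l1)) in *. set (s2 := sqrt (exp l2)) in *. set (s3 := sqrt (exp l3)) in *.
  exists (sin t1 / s1). split; [apply Rdiv_lt_0_compat; lra|].
  split; [field; lra|]. split.
  - replace (sin t2) with (s2 / (s2 / sin t2)) by (field; lra).
    rewrite <- E12. field. lra.
  - replace (sin t3) with (s3 / (s3 / sin t3)) by (field; lra).
    rewrite <- E23. field. lra.
Qed.

Lemma sector_angle_of_sines a b c x y z q : 0 < a -> 0 < b -> 0 < c -> 0 < x < PI ->
  x + y + z = 2 * PI -> q <> 0 -> sin x = q * a -> sin y = q * b -> sin z = q * c ->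
  x = sector_angle a b c.
Proof.
  intros Ha Hb Hc Hx Hsum Hq Sx Sy Sz. unfold sector_angle.
  rewrite <- (cos_angle_of_sines a b c (PI - x) (PI - y) (PI - z) q); try lra;
    rewrite ?sin_PI_x; try assumption.
  rewrite acos_cos by lra. ring.
Qed.

Lemma sector_angles_unique l1 l2 l3 s1 s2 s3 : tri_ineq (lam l1) (lam l2) (lam l3) ->
  angle_triple s1 s2 s3 -> sine_rel l1 l2 l3 s1 s2 s3 ->
  s1 = sector_angle (lam l1) (lam l2) (lam l3) /\ s2 = sector_angle (lam l2) (lam l3) (lam l1) /\
  s3 = sector_angle (lam l3) (lam l1) (lam l2).
Proof.
  intros T A R. destruct (sine_rel_proportional _ _ _ _ _ _ A R) as (k & Hk & S1 & S2 & S3).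
  rewrite !sqrt_exp_lam in S1, S2, S3.
  destruct A as (A1 & A2 & A3 & Hsum). destruct T as (Ha & Hb & Hc & _).
  assert (0 < sqrt 2) by (apply sqrt_lt_R0; lra).
  assert (Hq : k / sqrt 2 <> 0) by (apply Rgt_not_eq, Rdiv_lt_0_compat; lra).
  assert (Sq : forall t l, sin t = k * (lam l / sqrt 2) -> sin t = k / sqrt 2 * lam l)
    by (intros t l ->; field; lra).
  apply Sq in S1, S2, S3.
  split; [|split]; eapply sector_angle_of_sines; eauto; lra.
Qed.

Lemma sqrt_exp_shift x y c : 0 < c -> sqrt (exp y) = c * sqrt (exp x) -> y = x + ln (c * c).
Proof.
  intros Hc E.
  assert (Ee : exp y = c * c * exp x).
  { rewrite <- (sqrt_sqrt (exp y)), <- (sqrt_sqrt (exp x)) by (apply Rlt_le, exp_pos).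
    rewrite E. ring. }
  rewrite <- (ln_exp y), Ee, ln_mult, ln_exp by (try apply exp_pos; nra). ring.
Qed.

Lemma sine_rel_shift t1 t2 t3 l1 l2 l3 k1 k2 k3 : angle_triple t1 t2 t3 ->
  sine_rel l1 l2 l3 t1 t2 t3 -> sine_rel k1 k2 k3 t1 t2 t3 ->
  exists c, k1 = l1 + c /\ k2 = l2 + c /\ k3 = l3 + c.
Proof.
  intros A Rl Rk.
  destruct (sine_rel_proportional _ _ _ _ _ _ A Rl) as (p & Hp & P1 & P2 & P3).
  destruct (sine_rel_proportional _ _ _ _ _ _ A Rk) as (q & Hq & Q1 & Q2 & Q3).
  assert (Shift : forall l k, p * sqrt (exp l) = q * sqrt (exp k) -> k = l + ln (p / q * (p / q))).
  { intros l k E. apply sqrt_exp_shift; [apply Rdiv_lt_0_compat; lra|].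
    apply Rmult_eq_reg_l with q; [|lra]. rewrite <- E. field. lra. }
  exists (ln (p / q * (p / q))).
  split; [|split]; apply Shift; congruence.
Qed.

(** * Signs along rays *)

Lemma pos_mul_neg_iff a x : 0 < a -> (a * x < 0 <-> x < 0).
Proof.
  intro Ha. split; intro H; [|nra].
  destruct (Rlt_or_le x 0) as [?|Hx]; [assumption|].
  pose proof (Rmult_le_pos _ _ (Rlt_le _ _ Ha) Hx). lra.
Qed.

Lemma sign_choice D : D <> 0 -> exists e, e * e = 1 /\ e * D < 0.
Proof.
  intro HD. destruct (Rlt_or_le D 0) as [h|h].
  - exists 1. split; lra.
  - exists (-1). split; [lra|]. destruct h; [lra|congruence].
Qed.

Lemma sign_unique e e' D : e * e = 1 -> e' * e' = 1 -> e * D < 0 -> e' * D < 0 -> e' = e.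
Proof.
  intros He He' H H'.
  assert (E : (e' - e) * (e' + e) = 0) by lra.
  apply Rmult_integral in E. destruct E as [E|E]; [lra|].
  assert (e' = - e) by lra. subst e'. nra.
Qed.

Definition eventually (P : R -> Prop) : Prop := exists T, forall t, T <= t -> P t.

Lemma eventually_ext (P Q : R -> Prop) : (forall t, P t <-> Q t) -> (eventually P <-> eventually Q).
Proof. intro E. split; intros [T HT]; exists T; intros t Ht; apply E, HT, Ht. Qed.

Lemma eventually_sign f c : eventually (fun t => 0 < f t) ->
  (eventually (fun t => f t * c < 0) <-> c < 0).
Proof.
  intros [T HT]. split.
  - intros [T' HT']. pose proof (HT (Rmax T T') (Rmax_l _ _)) as P.
    pose proof (HT' (Rmax T T') (Rmax_r _ _)) as N.
    destruct (Rlt_or_le c 0) as [?|Hc]; [assumption|].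
    pose proof (Rmult_le_pos _ _ (Rlt_le _ _ P) Hc). lra.
  - intro Hc. exists T. intros t Ht. pose proof (HT t Ht). nra.
Qed.

Lemma eventually_affine_pos a k : 0 < k -> eventually (fun t => 0 < a + t * k).
Proof.
  intro Hk. exists (- a / k + 1). intros t Ht.
  apply Rmult_le_compat_r with (r := k) in Ht; [|lra].
  replace ((- a / k + 1) * k) with (- a + k) in Ht by (field; lra). lra.
Qed.

Lemma eventually_cosh_sinh_pos A B : A ^ 2 < B ^ 2 -> 0 < B ->
  eventually (fun t => 0 < cosh t * A + sinh t * B).
Proof.
  intros HAB HB.
  assert (Hm : 0 < B - A).
  { destruct (Rlt_or_le A B) as [?|HBA]; [lra|].
    assert (B * B <= A * A) by (apply Rmult_le_compat; lra). nra. }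
  assert (Hp : 0 < A + B).
  { destruct (Rlt_or_le (- B) A) as [?|HBA]; [lra|].
    assert (B * B <= - A * - A) by (apply Rmult_le_compat; lra). nra. }
  exists ((B - A) / (A + B)). intros t Ht.
  assert (0 < (B - A) / (A + B)) by (apply Rdiv_lt_0_compat; lra).
  assert (Ht0 : 0 < t) by lra.
  pose proof (exp_ineq1 t (Rgt_not_eq _ _ Ht0)) as Ex.
  unfold cosh, sinh. rewrite exp_Ropp. set (x := exp t) in *.
  (* [2 x (cosh t A + sinh t B) = x^2 (A + B) - (B - A)] and [x^2 > x > t >= (B - A) / (A + B)] *)
  apply Rmult_lt_reg_l with (2 * x); [lra|].
  replace (2 * x * ((x + / x) / 2 * A + (x - / x) / 2 * B)) with (x * x * (A + B) - (B - A))
    by (field; lra).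
  apply Rmult_le_compat_r with (r := A + B) in Ht; [|lra].
  replace ((B - A) / (A + B) * (A + B)) with (B - A) in Ht by (field; lra).
  assert (t < x * x) by nra. nra.
Qed.

(** * Bisector rays at an equidistant point *)

Lemma cosh_sq_sub_sinh_sq t : cosh t ^ 2 - sinh t ^ 2 = 1.
Proof.
  unfold cosh, sinh. rewrite exp_Ropp. pose proof (exp_pos t). field. lra.
Qed.

Lemma cosh_pos t : 0 < cosh t.
Proof. unfold cosh. pose proof (exp_pos t). pose proof (exp_pos (- t)). lra. Qed.

Lemma mink_georay Z v t W : mink (georay Z v t) W = cosh t * mink Z W + sinh t * mink v W.
Proof. unfold georay. mink_expand. reflexivity. Qed.

Lemma det3_georay a b Z v t : det3 a b (georay Z v t) = cosh t * det3 a b Z + sinh t * det3 a b v.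
Proof. rewrite <- !mink_mcross, !(mink_sym (mcross a b)). apply mink_georay. Qed.

Lemma georay_hpoint Z v t : hpoint Z -> unit_tangent Z v -> hpoint (georay Z v t).
Proof.
  intros HZ [HvZ Hvv]. pose proof HZ as [HZZ _]. pose proof (cosh_sq_sub_sinh_sq t).
  pose proof (cosh_pos t).
  apply hpoint_of_mink with Z; [|exact HZ|].
  - unfold georay. mink_expand. rewrite HZZ, Hvv, (mink_sym Z v), HvZ. lra.
  - rewrite mink_georay, HZZ, HvZ. lra.
Qed.

Lemma hsd_eq_iff X L M : hpoint X -> lightlike L -> lightlike M ->
  hsd X L = hsd X M <-> mink X L = mink X M.
Proof.
  intros HX HL HM. pose proof (mink_hpoint_lightlike _ _ HX HL).
  pose proof (mink_hpoint_lightlike _ _ HX HM). unfold hsd. split.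
  - intro E. apply ln_inv in E; lra.
  - intros ->. reflexivity.
Qed.

Lemma vscale_cancel k c v w : k <> 0 -> vscale k v = vscale c w -> v = vscale (c / k) w.
Proof.
  destruct v, w. unfold vscale. intros Hk E. injection E. intros.
  f_equal; field_simplify_eq; auto; rewrite Rmult_comm; assumption.
Qed.

Lemma mcross_orthogonal Z d v : mink v Z = 0 -> mink v d = 0 -> mink Z d = 0 ->
  vscale (mink (mcross Z d) (mcross Z d)) v = vscale (det3 Z d v) (mcross Z d).
Proof.
  intros HvZ Hvd HZd. pose proof (det3_cramer Z d (mcross Z d) v) as C.
  rewrite <- !(mink_mcross _ _ (mcross Z d)), !mink_mcross_mcross in C.
  rewrite (mink_sym d Z), HvZ, Hvd, HZd in C. rewrite mink_mcross_mcross, (mink_sym d Z), HZd.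
  rewrite C.
  generalize (mcross Z d). intro N. destruct Z, d, N. unfold vadd, vscale. simpl. f_equal; ring.
Qed.

(* A decorated side [Lj Lk] together with a point [Z] at signed distance [ln r] from both
   horocycles; [l] is the side's λ-length, [-<Lj, Lk> = l^2]. *)
Record side_config (Z Lj Lk : V3) (r l : R) : Prop := {
  side_Z : hpoint Z;
  side_Lj : lightlike Lj;
  side_Lk : lightlike Lk;
  side_Zj : mink Z Lj = - r;
  side_Zk : mink Z Lk = - r;
  side_jk : mink Lj Lk = - (l * l);
  side_r : 0 < r;
  side_l : 0 < l }.

Ltac side_facts S :=
  let G := fresh in pose proof S as G; destruct G as [[?ZZ ?] [?jj ?] [?kk ?] ?Zj ?Zk ?jk ? ?].

(* The unit tangent at [Z] to the bisector of [Lj Lk], in one of the two directions [e = ±1]. *)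
Definition hbis_dir (e : R) (Z Lj Lk : V3) : V3 :=
  vscale (e / (sqrt 2 * sqrt (- mink Lj Lk))) (mcross Z (vsub Lk Lj)).

Lemma mink_hbis_dir_sides e Z Lj Lk : mink (hbis_dir e Z Lj Lk) Lj = mink (hbis_dir e Z Lj Lk) Lk.
Proof.
  unfold hbis_dir. rewrite !mink_vscale_l, !mink_mcross.
  unfold det3, vsub, vadd, vscale; simpl; ring.
Qed.

Lemma mink_hbis_dir_Z e Z Lj Lk : mink (hbis_dir e Z Lj Lk) Z = 0.
Proof. unfold hbis_dir. rewrite mink_vscale_l, mink_mcross. unfold det3; ring. Qed.

Section SideBisector.

Variables (Z Lj Lk : V3) (r l : R).
Hypothesis S : side_config Z Lj Lk r l.

Lemma hbis_dir_eq e : hbis_dir e Z Lj Lk = vscale (e / (sqrt 2 * l)) (mcross Z (vsub Lk Lj)).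
Proof.
  side_facts S. unfold hbis_dir. rewrite jk, Ropp_involutive, sqrt_square by lra. reflexivity.
Qed.

Lemma mink_side_normal : mink (mcross Z (vsub Lk Lj)) (mcross Z (vsub Lk Lj)) = 2 * (l * l).
Proof. side_facts S. mink_expand. gram. ring. Qed.

Lemma hbis_dir_unit e : e * e = 1 -> unit_tangent Z (hbis_dir e Z Lj Lk).
Proof.
  intro He. split; [apply mink_hbis_dir_Z|].
  pose proof (side_l _ _ _ _ _ S). pose proof (sqrt_lt_R0 2 ltac:(lra)).
  rewrite hbis_dir_eq, mink_vscale_l, mink_vscale_r, mink_side_normal.
  transitivity (e * e * (2 * (l * l)) / (sqrt 2 * sqrt 2 * (l * l))); [field; lra|].
  rewrite He, sqrt_sqrt by lra. field. lra.
Qed.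

Lemma det3_hbis_dir e : det3 Lj Lk (hbis_dir e Z Lj Lk) = e * sqrt 2 * r * l.
Proof.
  pose proof (side_l _ _ _ _ _ S). pose proof (sqrt_lt_R0 2 ltac:(lra)).
  rewrite hbis_dir_eq, <- mink_mcross, mink_vscale_r.
  replace (mink (mcross Lj Lk) (mcross Z (vsub Lk Lj))) with (2 * r * (l * l))
    by (side_facts S; mink_expand; gram; ring).
  replace 2 with (sqrt 2 * sqrt 2) at 2 by (apply sqrt_sqrt; lra).
  field. lra.
Qed.

Lemma det3_side_Z_sq : det3 Lj Lk Z ^ 2 = 2 * (l * l) * r ^ 2 - (l * l) ^ 2.
Proof.
  side_facts S. replace (det3 Lj Lk Z ^ 2) with (det3 Lj Lk Z * det3 Lj Lk Z) by ring.
  rewrite det3_mul_det3. gram. ring.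
Qed.

Lemma hbis_dir_parallel v : unit_tangent Z v -> mink v Lj = mink v Lk ->
  exists e, e * e = 1 /\ v = hbis_dir e Z Lj Lk.
Proof.
  intros [HvZ Hvv] Hvjk. side_facts S.
  pose proof (sqrt_lt_R0 2 ltac:(lra)). pose proof (sqrt_sqrt 2 ltac:(lra)) as Hs2.
  assert (Hvd : mink v (vsub Lk Lj) = 0) by (rewrite mink_vsub_r; lra).
  assert (HZd : mink Z (vsub Lk Lj) = 0) by (rewrite mink_vsub_r; gram; ring).
  pose proof (mcross_orthogonal Z _ v HvZ Hvd HZd) as E.
  rewrite mink_side_normal in E. apply vscale_cancel in E; [|nra].
  set (c := det3 Z (vsub Lk Lj) v) in E.
  assert (Hc : c * c = 2 * (l * l)).
  { rewrite E, mink_vscale_l, mink_vscale_r, mink_side_normal in Hvv.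
    assert (Hc : c * c / (2 * (l * l)) = 1) by (rewrite <- Hvv; field; nra).
    rewrite <- (Rmult_1_l (2 * (l * l))), <- Hc. field. nra. }
  assert (Hl2 : 2 * (l * l) = sqrt 2 * l * (sqrt 2 * l)).
  { transitivity (sqrt 2 * sqrt 2 * (l * l)); [rewrite Hs2|]; ring. }
  rewrite Hl2 in E, Hc. exists (c / (sqrt 2 * l)). split.
  - transitivity (c * c / (sqrt 2 * l * (sqrt 2 * l))); [field|rewrite Hc; field]; nra.
  - rewrite E, hbis_dir_eq. f_equal. field. nra.
Qed.

Lemma hbis_dir_beyond_iff Li e : e * e = 1 ->
  eventually (fun t => beyond_side (georay Z (hbis_dir e Z Lj Lk) t) Li Lj Lk) <->
  e * det3 Lj Lk Li < 0.
Proof.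
  intro He. pose proof (side_r _ _ _ _ _ S). pose proof (side_l _ _ _ _ _ S).
  pose proof (sqrt_lt_R0 2 ltac:(lra)) as H2. pose proof (sqrt_sqrt 2 ltac:(lra)) as Hs2.
  pose proof det3_side_Z_sq as A2.
  set (D := det3 Lj Lk Li). set (A := det3 Lj Lk Z) in *. set (s := sqrt 2 * r * l).
  (* up to the factor [e^2 = 1], [beyond_side] reads [(cosh t (e A) + sinh t s) (e D) < 0] *)
  rewrite (eventually_ext _ (fun t => (cosh t * (e * A) + sinh t * s) * (e * D) < 0)).
  - apply eventually_sign, eventually_cosh_sinh_pos;
      [|unfold s; repeat apply Rmult_lt_0_compat; lra].
    replace ((e * A) ^ 2) with (e * e * A ^ 2) by ring.
    replace (s ^ 2) with (sqrt 2 * sqrt 2 * (r * l) ^ 2) by (unfold s; ring).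
    rewrite He, A2, Hs2. assert (0 < (l * l) ^ 2) by (apply pow_lt; nra). nra.
  - intro t. unfold beyond_side. rewrite det3_georay, det3_hbis_dir. fold A D.
    replace ((cosh t * A + sinh t * (e * sqrt 2 * r * l)) * D)
      with ((cosh t * (e * A) + sinh t * s) * (e * D)); [reflexivity|].
    transitivity (cosh t * A * D * (e * e) + sinh t * (e * s) * D);
      [ring|rewrite He; unfold s; ring].
Qed.

Lemma hray_iff Li v : hray Z Li Lj Lk v <->
  exists e, e * e = 1 /\ e * det3 Lj Lk Li < 0 /\ v = hbis_dir e Z Lj Lk.
Proof.
  pose proof (side_Z _ _ _ _ _ S) as HZ. pose proof (side_Lj _ _ _ _ _ S) as HLj.
  pose proof (side_Lk _ _ _ _ _ S) as HLk.
  pose proof (side_Zj _ _ _ _ _ S) as Zj. pose proof (side_Zk _ _ _ _ _ S) as Zk.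
  split.
  - intros (U & Hbis & Hev).
    assert (Hvjk : mink v Lj = mink v Lk).
    { destruct (Hbis 1 ltac:(lra)) as [HX Hh]. apply hsd_eq_iff in Hh; try assumption.
      rewrite !mink_georay, Zj, Zk in Hh.
      assert (0 < sinh 1) by (rewrite <- sinh_0; apply sinh_lt; lra).
      apply Rmult_eq_reg_l with (sinh 1); lra. }
    destruct (hbis_dir_parallel v U Hvjk) as (e & He & ->).
    exists e. split; [exact He|]. split; [apply (hbis_dir_beyond_iff Li e He), Hev|reflexivity].
  - intros (e & He & HeD & ->). pose proof (hbis_dir_unit e He) as U.
    split; [exact U|split].
    + intros t _. pose proof (georay_hpoint _ _ t HZ U) as HX. split; [exact HX|].
      apply hsd_eq_iff; try assumption.
      rewrite !mink_georay, Zj, Zk, mink_hbis_dir_sides. reflexivity.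
    + apply hbis_dir_beyond_iff; assumption.
Qed.

Lemma bisector_foot_mink F : on_side F Lj Lk -> on_bisector F Lj Lk ->
  0 < - mink Z F /\ (- mink Z F) ^ 2 * (l * l) = 2 * r ^ 2.
Proof.
  pose proof (side_Lj _ _ _ _ _ S). pose proof (side_Lk _ _ _ _ _ S). side_facts S.
  intros [[HFF _] [a [b (Ha & Hb & ->)]]] [HF Hh].
  apply hsd_eq_iff in Hh; try assumption. revert HFF Hh. mink_expand. gram. intros HFF Hh.
  assert (b = a) by (apply Rmult_eq_reg_r with (- (l * l)); nra). subst b.
  split; [nra|].
  transitivity (2 * r ^ 2 * (2 * a * a * (l * l))); [ring|].
  replace (2 * a * a * (l * l)) with 1 by lra. ring.
Qed.

Lemma bisector_foot_exists : exists F, on_side F Lj Lk /\ on_bisector F Lj Lk.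
Proof.
  pose proof (side_Lj _ _ _ _ _ S). pose proof (side_Lk _ _ _ _ _ S). side_facts S.
  set (a := / (sqrt 2 * l)).
  assert (Ha : 0 < a) by (apply Rinv_0_lt_compat, Rmult_lt_0_compat; [apply sqrt_lt_R0|]; lra).
  assert (Haa : 2 * a * a * mink Lj Lk = -1).
  { rewrite jk. unfold a. rewrite <- (sqrt_sqrt 2) at 1 by lra. field.
    split; [lra|]. apply Rgt_not_eq, sqrt_lt_R0. lra. }
  assert (HF : hpoint (vadd (vscale a Lj) (vscale a Lk))) by (apply hpoint_vadd; auto).
  exists (vadd (vscale a Lj) (vscale a Lk)). split.
  - split; [exact HF|]. exists a, a. auto.
  - split; [exact HF|]. apply hsd_eq_iff; try assumption.
    mink_expand. gram. ring.
Qed.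

End SideBisector.

(** * Equidistant configurations *)

Definition equi_config (Z L1 L2 L3 : V3) (r l1 l2 l3 : R) : Prop :=
  side_config Z L2 L3 r l1 /\ side_config Z L3 L1 r l2 /\ side_config Z L1 L2 r l3.

Lemma equi_config_rot Z L1 L2 L3 r l1 l2 l3 :
  equi_config Z L1 L2 L3 r l1 l2 l3 -> equi_config Z L2 L3 L1 r l2 l3 l1.
Proof. unfold equi_config; tauto. Qed.

Ltac config_facts C :=
  let S1 := fresh in let S2 := fresh in let S3 := fresh in
  pose proof C as [S1 [S2 S3]]; side_facts S1; side_facts S2; side_facts S3; clear S1 S2 S3.

Lemma det3_vscale a s v t w : det3 a (vscale s v) (vscale t w) = s * t * det3 a v w.
Proof. unfold det3, vscale; simpl; ring. Qed.

Lemma tangent_lagrange Z v w : hpoint Z -> unit_tangent Z v -> unit_tangent Z w ->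
  det3 Z v w ^ 2 + mink v w ^ 2 = 1.
Proof.
  intros [ZZ _] [vZ vv] [wZ ww].
  replace (det3 Z v w ^ 2) with (det3 Z v w * det3 Z v w) by ring.
  rewrite det3_mul_det3. gram. rewrite (mink_sym w v). ring.
Qed.

(* If the rays [vi] and [vk] lie on opposite sides of [vj], the sector from [vj] to [vk]
   avoiding [vi] is the convex one. *)
Lemma sector_convex cji dji cjk d : cji * cjk < 0 -> cjk ^ 2 + d ^ 2 = 1 ->
  (if Rlt_dec (if Rle_dec 0 cji then acos dji else 2 * PI - acos dji)
              (if Rle_dec 0 cjk then acos d else 2 * PI - acos d)
   then 2 * PI - (if Rle_dec 0 cjk then acos d else 2 * PI - acos d)
   else (if Rle_dec 0 cjk then acos d else 2 * PI - acos d)) = acos d.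
Proof.
  intros Hc Hn.
  assert (Hd : -1 < d < 1) by (assert (0 < cjk * cjk) by nra; nra).
  pose proof (acos_bound_lt d Hd). pose proof (acos_bound dji). pose proof PI_RGT_0.
  destruct (Rle_dec 0 cjk) as [Hk|Hk].
  - assert (cji < 0) by nra.
    destruct (Rle_dec 0 cji); [lra|].
    destruct (Rlt_dec (2 * PI - acos dji) (acos d)); [lra|reflexivity].
  - assert (0 < cji) by nra.
    destruct (Rle_dec 0 cji); [|lra].
    destruct (Rlt_dec (acos dji) (2 * PI - acos d)); [ring|lra].
Qed.

Section Config.

Variables (Z L1 L2 L3 : V3) (r l1 l2 l3 : R).
Hypothesis C : equi_config Z L1 L2 L3 r l1 l2 l3.

Lemma det3_config_sq : det3 L2 L3 L1 ^ 2 = 2 * (l1 * l2 * l3) ^ 2.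
Proof.
  config_facts C. replace (det3 L2 L3 L1 ^ 2) with (det3 L2 L3 L1 * det3 L2 L3 L1) by ring.
  rewrite det3_mul_det3. gram. ring.
Qed.

Lemma det3_config_Z :
  det3 L2 L3 Z * det3 L2 L3 L1 = r * (l1 * l1) * (l2 * l2 + l3 * l3 - l1 * l1).
Proof. config_facts C. rewrite det3_mul_det3. gram. ring. Qed.

(* Cramer's rule for [Z] in the basis [L2, L3, L1], paired with [Z]. *)
Lemma det3_config_cramer :
  det3 L2 L3 L1 = r * (det3 L2 L3 Z + det3 L3 L1 Z + det3 L1 L2 Z).
Proof.
  pose proof (f_equal (fun X => mink X Z) (det3_cramer L2 L3 L1 Z)) as E. simpl in E.
  revert E. mink_expand. config_facts C. gram. intro E.
  replace (det3 L3 L1 Z) with (det3 Z L3 L1) by (unfold det3; ring).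
  replace (det3 L1 L2 Z) with (det3 L2 Z L1) by (unfold det3; ring).
  apply Rmult_eq_reg_r with (-1); [|lra]. rewrite E. ring.
Qed.

End Config.

Lemma equi_config_heron Z L1 L2 L3 r l1 l2 l3 : equi_config Z L1 L2 L3 r l1 l2 l3 ->
  r ^ 2 * heron l1 l2 l3 = 2 * (l1 * l2 * l3) ^ 2.
Proof.
  intro C. pose proof (equi_config_rot _ _ _ _ _ _ _ _ C) as C'.
  pose proof (equi_config_rot _ _ _ _ _ _ _ _ C') as C''.
  pose proof (det3_config_Z _ _ _ _ _ _ _ _ C) as A1.
  pose proof (det3_config_Z _ _ _ _ _ _ _ _ C') as A2.
  pose proof (det3_config_Z _ _ _ _ _ _ _ _ C'') as A3.
  replace (det3 L3 L1 L2) with (det3 L2 L3 L1) in A2 by (unfold det3; ring).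
  replace (det3 L1 L2 L3) with (det3 L2 L3 L1) in A3 by (unfold det3; ring).
  rewrite <- (det3_config_sq _ _ _ _ _ _ _ _ C).
  replace (det3 L2 L3 L1 ^ 2) with (det3 L2 L3 L1 * det3 L2 L3 L1) by ring.
  rewrite (det3_config_cramer _ _ _ _ _ _ _ _ C) at 1.
  transitivity (r * (det3 L2 L3 Z * det3 L2 L3 L1 + det3 L3 L1 Z * det3 L2 L3 L1
                     + det3 L1 L2 Z * det3 L2 L3 L1)); [|ring].
  rewrite A1, A2, A3. unfold heron. ring.
Qed.

Lemma equi_config_tri_ineq Z L1 L2 L3 r l1 l2 l3 : equi_config Z L1 L2 L3 r l1 l2 l3 ->
  tri_ineq l1 l2 l3.
Proof.
  intro C. pose proof (equi_config_heron _ _ _ _ _ _ _ _ C) as H.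
  destruct C as [[_ _ _ _ _ _ Hr Hl1] [[_ _ _ _ _ _ _ Hl2] [_ _ _ _ _ _ _ Hl3]]].
  apply tri_ineq_of_heron; try assumption.
  apply Rmult_lt_reg_l with (r ^ 2); [apply pow_lt; lra|]. rewrite Rmult_0_r, H.
  apply Rmult_lt_0_compat; [lra|]. apply pow_lt. repeat apply Rmult_lt_0_compat; lra.
Qed.

Section ConfigAngles.

Variables (Z L1 L2 L3 : V3) (r l1 l2 l3 : R).
Hypothesis C : equi_config Z L1 L2 L3 r l1 l2 l3.

Lemma det3_config_neq0 : det3 L2 L3 L1 <> 0.
Proof.
  pose proof (det3_config_sq _ _ _ _ _ _ _ _ C) as D2. destruct C as [S1 [S2 S3]].
  pose proof (side_l _ _ _ _ _ S1). pose proof (side_l _ _ _ _ _ S2).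
  pose proof (side_l _ _ _ _ _ S3).
  intro D. rewrite D in D2.
  assert (0 < (l1 * l2 * l3) ^ 2) by (apply pow_lt; repeat apply Rmult_lt_0_compat; lra). lra.
Qed.

Lemma mink_hbis_dir_hbis_dir e : e * e = 1 ->
  mink (hbis_dir e Z L3 L1) (hbis_dir e Z L1 L2) = - cos_angle l1 l2 l3.
Proof.
  intro He. pose proof C as [S1 [S2 S3]].
  rewrite (hbis_dir_eq _ _ _ _ _ S2), (hbis_dir_eq _ _ _ _ _ S3).
  rewrite mink_vscale_l, mink_vscale_r. config_facts C. mink_expand. gram.
  pose proof (sqrt_lt_R0 2 ltac:(lra)). pose proof (sqrt_sqrt 2 ltac:(lra)) as Hs2.
  unfold cos_angle.
  transitivity (e * e * (l1 * l1 - l2 * l2 - l3 * l3) / (sqrt 2 * sqrt 2 * l2 * l3));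
    [field; lra|].
  rewrite He, Hs2. field. lra.
Qed.

Lemma det3_hbis_dir_hbis_dir e : e * e = 1 ->
  det3 Z (hbis_dir e Z L3 L1) (hbis_dir e Z L2 L3) *
  det3 Z (hbis_dir e Z L3 L1) (hbis_dir e Z L1 L2) < 0.
Proof.
  intro He. pose proof C as [S1 [S2 S3]].
  pose proof (heron_pos _ _ _ (equi_config_tri_ineq _ _ _ _ _ _ _ _ C)) as HH.
  pose proof (side_l _ _ _ _ _ S1). pose proof (side_l _ _ _ _ _ S2).
  pose proof (side_l _ _ _ _ _ S3).
  pose proof (sqrt_lt_R0 2 ltac:(lra)). pose proof (sqrt_sqrt 2 ltac:(lra)) as Hs2.
  rewrite (hbis_dir_eq _ _ _ _ _ S1), (hbis_dir_eq _ _ _ _ _ S2), (hbis_dir_eq _ _ _ _ _ S3).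
  rewrite !det3_vscale.
  set (N1 := mcross Z (vsub L3 L2)). set (N2 := mcross Z (vsub L1 L3)).
  set (N3 := mcross Z (vsub L2 L1)).
  (* [N1 + N2 + N3 = 0] *)
  assert (E : det3 Z N2 N1 = - det3 Z N2 N3).
  { unfold N1, N2, N3. destruct Z, L1, L2, L3.
    unfold det3, mcross, vsub, vadd, vscale; simpl. ring. }
  assert (Q : det3 Z N2 N3 * det3 Z N2 N3 = heron l1 l2 l3).
  { rewrite det3_mul_det3. unfold N2, N3. config_facts C.
    rewrite !(mink_sym Z (mcross Z _)), !mink_mcross_self, heron_eq. mink_expand. gram. ring. }
  rewrite E.
  replace (e / (sqrt 2 * l2) * (e / (sqrt 2 * l1)) * - det3 Z N2 N3 *
           (e / (sqrt 2 * l2) * (e / (sqrt 2 * l3)) * det3 Z N2 N3))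
    with (- ((e * e) * (e * e) / ((sqrt 2 * sqrt 2) * (sqrt 2 * sqrt 2) * (l1 * l2 * l2 * l3)))
          * (det3 Z N2 N3 * det3 Z N2 N3)) by (field; lra).
  rewrite He, Hs2, Q.
  assert (0 < 1 * 1 / (2 * 2 * (l1 * l2 * l2 * l3)))
    by (apply Rdiv_lt_0_compat; [lra|repeat apply Rmult_lt_0_compat; lra]).
  nra.
Qed.

Lemma hsector_hbis_dir e : e * e = 1 ->
  hsector Z (hbis_dir e Z L2 L3) (hbis_dir e Z L3 L1) (hbis_dir e Z L1 L2) = sector_angle l1 l2 l3.
Proof.
  intro He. pose proof C as [S1 [S2 S3]].
  pose proof (tangent_lagrange Z _ _ (side_Z _ _ _ _ _ S1)
                (hbis_dir_unit _ _ _ _ _ S2 e He) (hbis_dir_unit _ _ _ _ _ S3 e He)) as TL.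
  unfold hsector, hccw. rewrite sector_convex; [|apply det3_hbis_dir_hbis_dir, He|exact TL].
  rewrite mink_hbis_dir_hbis_dir, acos_opp by exact He. reflexivity.
Qed.

Lemma bis_len_iff s : bis_len Z L1 L2 L3 s <-> s = artanh (cos_angle l1 l2 l3).
Proof.
  pose proof C as [S1 [S2 S3]].
  pose proof (side_r _ _ _ _ _ S1). pose proof (side_l _ _ _ _ _ S1).
  pose proof (side_l _ _ _ _ _ S2). pose proof (side_l _ _ _ _ _ S3).
  pose proof (equi_config_tri_ineq _ _ _ _ _ _ _ _ C) as T.
  pose proof (equi_config_heron _ _ _ _ _ _ _ _ C) as HH.
  assert (Hval : forall F, on_side F L2 L3 -> on_bisector F L2 L3 ->
            (if Rlt_dec (det3 L2 L3 Z * det3 L2 L3 L1) 0 then - hdist Z F else hdist Z F) =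
            artanh (cos_angle l1 l2 l3)).
  { intros F HF HbF. destruct (bisector_foot_mink _ _ _ _ _ S1 F HF HbF) as [Hy Hy2].
    rewrite (det3_config_Z _ _ _ _ _ _ _ _ C). unfold hdist.
    apply signed_arcosh_artanh; [apply cos_angle_bound, T|exact Hy| |].
    - replace (1 - cos_angle l1 l2 l3 * cos_angle l1 l2 l3) with (1 - cos_angle l1 l2 l3 ^ 2)
        by ring.
      rewrite one_sub_cos_angle_sq by lra.
      replace (heron l1 l2 l3) with (2 * (l1 * l2 * l3) ^ 2 / r ^ 2)
        by (rewrite <- HH; field; lra).
      replace (- mink Z F * - mink Z F) with (2 * r ^ 2 / (l1 * l1))
        by (rewrite <- Hy2; field; lra).
      field. repeat split; lra.
    - assert (0 < r * (l1 * l1)) by (apply Rmult_lt_0_compat; nra).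
      assert (0 < / (2 * l2 * l3)) by (apply Rinv_0_lt_compat; repeat apply Rmult_lt_0_compat; lra).
      unfold cos_angle, Rdiv. rewrite (Rmult_comm _ (/ _)), !pos_mul_neg_iff by assumption.
      reflexivity. }
  split.
  - intros (F & HF & HbF & ->). apply Hval; assumption.
  - intros ->. destruct (bisector_foot_exists _ _ _ _ _ S1) as (F & HF & HbF).
    exists F. split; [exact HF|split; [exact HbF|symmetry; apply Hval; assumption]].
Qed.

End ConfigAngles.

(** * Bisector rays at the circumcenter *)

Definition rot (p : pt2) : pt2 := (- snd p, fst p).

(* The unit direction of the perpendicular bisector of [Pj Pk], in one of the two
   directions [t = ±1]. *)
Definition ebis_dir (t : R) (Pj Pk : pt2) : pt2 := pscale (t / edist Pj Pk) (rot (psub Pk Pj)).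

Lemma edot_edist p q : edot (psub p q) (psub p q) = edist p q * edist p q.
Proof. unfold edist. rewrite sqrt_sqrt; [reflexivity|]. unfold edot. nra. Qed.

Lemma edist_sym p q : edist p q = edist q p.
Proof. unfold edist, edot, psub; simpl. f_equal. ring. Qed.

Lemma edist_eq_iff p q p' q' :
  edist p q = edist p' q' <-> edot (psub p q) (psub p q) = edot (psub p' q') (psub p' q').
Proof.
  rewrite !edot_edist. split; [intros ->; reflexivity|].
  intro E. apply Rsqr_inj; [apply sqrt_pos|apply sqrt_pos|exact E].
Qed.

Lemma edot_pscale a b p q : edot (pscale a p) (pscale b q) = a * b * edot p q.
Proof. unfold edot, pscale; simpl; ring. Qed.

Lemma ecross_pscale a b p q : ecross (pscale a p) (pscale b q) = a * b * ecross p q.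
Proof. unfold ecross, pscale; simpl; ring. Qed.

Lemma ecross_edot_lagrange u w : ecross u w ^ 2 + edot u w ^ 2 = edot u u * edot w w.
Proof. unfold ecross, edot; ring. Qed.

Lemma pscale_cancel k c u w : k <> 0 -> pscale k u = pscale c w -> u = pscale (c / k) w.
Proof.
  destruct u, w. unfold pscale. simpl. intros Hk E. injection E. intros.
  f_equal; field_simplify_eq; auto; rewrite Rmult_comm; assumption.
Qed.

Lemma orient_ray Pj Pk O s u :
  orient Pj Pk (padd O (pscale s u)) = orient Pj Pk O + s * ecross (psub Pk Pj) u.
Proof. unfold orient, ecross, psub, padd, pscale; simpl; ring. Qed.

Lemma edist_ray_eq_iff O u s Pj Pk : edist O Pj = edist O Pk ->
  edist (padd O (pscale s u)) Pj = edist (padd O (pscale s u)) Pk <->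
  s * edot u (psub Pk Pj) = 0.
Proof.
  rewrite !edist_eq_iff. intro E.
  set (X := padd O (pscale s u)).
  assert (Id : edot (psub X Pj) (psub X Pj) - edot (psub X Pk) (psub X Pk) =
               edot (psub O Pj) (psub O Pj) - edot (psub O Pk) (psub O Pk)
               + 2 * (s * edot u (psub Pk Pj)))
    by (unfold X, edot, psub, padd, pscale; simpl; ring).
  lra.
Qed.

Section EuclideanSide.

Variables (O Pj Pk : pt2) (l : R).
Hypotheses (Hl : edist Pj Pk = l) (Hl0 : 0 < l) (HO : edist O Pj = edist O Pk).

Lemma edot_side : edot (psub Pk Pj) (psub Pk Pj) = l * l.
Proof. rewrite edot_edist, edist_sym, Hl. reflexivity. Qed.

Lemma ebis_dir_unit t : t * t = 1 -> edot (ebis_dir t Pj Pk) (ebis_dir t Pj Pk) = 1.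
Proof.
  intro Ht. unfold ebis_dir. rewrite Hl.
  transitivity (t * t / (l * l) * edot (psub Pk Pj) (psub Pk Pj));
    [unfold edot, pscale, rot; simpl; field; lra|].
  rewrite edot_side, Ht. field. lra.
Qed.

Lemma edot_ebis_dir_side t : edot (ebis_dir t Pj Pk) (psub Pk Pj) = 0.
Proof. unfold ebis_dir, edot, pscale, rot; simpl; ring. Qed.

Lemma ecross_side_ebis_dir t : ecross (psub Pk Pj) (ebis_dir t Pj Pk) = t * l.
Proof.
  unfold ebis_dir. rewrite Hl.
  transitivity (t / l * edot (psub Pk Pj) (psub Pk Pj));
    [unfold ecross, edot, pscale, rot; simpl; ring|].
  rewrite edot_side. field. lra.
Qed.

Lemma ebis_dir_parallel u : edot u u = 1 -> edot u (psub Pk Pj) = 0 ->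
  exists t, t * t = 1 /\ u = ebis_dir t Pj Pk.
Proof.
  intros Hu Hud.
  assert (E : pscale (edot (psub Pk Pj) (psub Pk Pj)) u =
              pscale (ecross (psub Pk Pj) u) (rot (psub Pk Pj))).
  { revert Hud. destruct (psub Pk Pj) as [d1 d2], u as [u1 u2].
    unfold pscale, edot, ecross, rot; simpl. intro H. f_equal.
    - replace ((d1 * d1 + d2 * d2) * u1)
        with ((d1 * u2 - d2 * u1) * - d2 + d1 * (u1 * d1 + u2 * d2)) by ring.
      rewrite H. ring.
    - replace ((d1 * d1 + d2 * d2) * u2)
        with ((d1 * u2 - d2 * u1) * d1 + d2 * (u1 * d1 + u2 * d2)) by ring.
      rewrite H. ring. }
  rewrite edot_side in E. apply pscale_cancel in E; [|nra].
  set (c := ecross (psub Pk Pj) u) in E.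
  assert (Hrot : edot (rot (psub Pk Pj)) (rot (psub Pk Pj)) = l * l)
    by (rewrite <- edot_side; unfold edot, rot; simpl; ring).
  assert (Hu' : c / (l * l) * (c / (l * l)) * (l * l) = 1)
    by (rewrite <- Hu, E, edot_pscale, Hrot; reflexivity).
  assert (Hc : c * c = l * l).
  { transitivity (c / (l * l) * (c / (l * l)) * (l * l) * (l * l)); [field; lra|].
    rewrite Hu'. ring. }
  exists (c / l). split.
  - transitivity (c * c / (l * l)); [field; lra|]. rewrite Hc. field. lra.
  - rewrite E. unfold ebis_dir. rewrite Hl. f_equal. field. lra.
Qed.

Lemma ebis_dir_beyond_iff Pi t : t * t = 1 ->
  eventually (fun s =>
    orient Pj Pk (padd O (pscale s (ebis_dir t Pj Pk))) * orient Pj Pk Pi < 0) <->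
  t * orient Pj Pk Pi < 0.
Proof.
  intro Ht. set (E := orient Pj Pk Pi). set (o := orient Pj Pk O).
  rewrite (eventually_ext _ (fun s => (t * o + s * l) * (t * E) < 0)).
  - apply eventually_sign, eventually_affine_pos, Hl0.
  - intro s. rewrite orient_ray, ecross_side_ebis_dir. fold o.
    replace ((o + s * (t * l)) * E) with ((t * o + s * l) * (t * E)); [reflexivity|].
    transitivity (o * E * (t * t) + s * (t * l) * E); [ring|rewrite Ht; ring].
Qed.

Lemma eray_iff Pi u : eray O Pi Pj Pk u <->
  exists t, t * t = 1 /\ t * orient Pj Pk Pi < 0 /\ u = ebis_dir t Pj Pk.
Proof.
  split.
  - intros (Hu & Hbis & Hev).
    assert (Hud : edot u (psub Pk Pj) = 0).
    { pose proof (proj1 (edist_ray_eq_iff O u 1 Pj Pk HO) (Hbis 1 ltac:(lra))). lra. }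
    destruct (ebis_dir_parallel u Hu Hud) as (t & Ht & ->).
    exists t. split; [exact Ht|]. split; [apply (ebis_dir_beyond_iff Pi t Ht), Hev|reflexivity].
  - intros (t & Ht & HtE & ->). split; [apply ebis_dir_unit, Ht|split].
    + intros s _. apply edist_ray_eq_iff; [exact HO|]. rewrite edot_ebis_dir_side. ring.
    + apply ebis_dir_beyond_iff; assumption.
Qed.

End EuclideanSide.

Section EuclideanTriangle.

Variables (P1 P2 P3 : pt2) (a b c : R).
Hypotheses (Htri : eucl_triangle P1 P2 P3 a b c) (T : tri_ineq a b c).

Lemma orient_sq : 4 * orient P2 P3 P1 ^ 2 = heron a b c.
Proof.
  destruct Htri as (Ha & Hb & Hc).
  apply (f_equal (fun x => x * x)) in Ha, Hb, Hc. rewrite <- edot_edist in Ha, Hb, Hc.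
  replace (heron a b c) with (2 * ((a * a) * (b * b) + (b * b) * (c * c) + (c * c) * (a * a))
                              - ((a * a) * (a * a) + (b * b) * (b * b) + (c * c) * (c * c)))
    by (unfold heron; ring).
  rewrite <- Ha, <- Hb, <- Hc. unfold orient, ecross, edot, psub; simpl. ring.
Qed.

Lemma edot_ebis_dir_ebis_dir t : t * t = 1 ->
  edot (ebis_dir t P3 P1) (ebis_dir t P1 P2) = - cos_angle a b c.
Proof.
  intro Ht. destruct T as (Ha & Hb & Hc & _). pose proof Htri as (Ea & Eb & Ec).
  apply (f_equal (fun x => x * x)) in Ea, Eb, Ec. rewrite <- edot_edist in Ea, Eb, Ec.
  unfold ebis_dir. rewrite (proj1 (proj2 Htri)), (proj2 (proj2 Htri)), edot_pscale.
  assert (Id : 2 * edot (rot (psub P1 P3)) (rot (psub P2 P1)) = a * a - b * b - c * c).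
  { rewrite <- Ea, <- Eb, <- Ec. unfold edot, rot, psub; simpl; ring. }
  unfold cos_angle.
  transitivity (t * t * (2 * edot (rot (psub P1 P3)) (rot (psub P2 P1))) / (2 * b * c));
    [field; lra|].
  rewrite Id, Ht. field. lra.
Qed.

Lemma ecross_ebis_dir_ebis_dir t : t * t = 1 ->
  ecross (ebis_dir t P3 P1) (ebis_dir t P2 P3) * ecross (ebis_dir t P3 P1) (ebis_dir t P1 P2) < 0.
Proof.
  intro Ht. pose proof orient_sq as E2. pose proof (heron_pos _ _ _ T) as HH.
  destruct T as (Ha & Hb & Hc & _). destruct Htri as (Ea & Eb & Ec).
  unfold ebis_dir. rewrite Ea, Eb, Ec, !ecross_pscale.
  replace (ecross (rot (psub P1 P3)) (rot (psub P3 P2))) with (- orient P2 P3 P1)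
    by (unfold orient, ecross, rot, psub; simpl; ring).
  replace (ecross (rot (psub P1 P3)) (rot (psub P2 P1))) with (orient P2 P3 P1)
    by (unfold orient, ecross, rot, psub; simpl; ring).
  replace (t / b * (t / a) * - orient P2 P3 P1 * (t / b * (t / c) * orient P2 P3 P1))
    with (- ((t * t) * (t * t) / (b * b * a * c)) * orient P2 P3 P1 ^ 2) by (field; lra).
  rewrite Ht.
  assert (0 < 1 * 1 / (b * b * a * c))
    by (apply Rdiv_lt_0_compat; [lra|repeat apply Rmult_lt_0_compat; lra]).
  nra.
Qed.

Lemma esector_ebis_dir t : t * t = 1 ->
  esector (ebis_dir t P2 P3) (ebis_dir t P3 P1) (ebis_dir t P1 P2) = sector_angle a b c.
Proof.
  intro Ht. destruct T as (Ha & Hb & Hc & _). pose proof Htri as (Ea & Eb & Ec).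
  pose proof (ebis_dir_unit P3 P1 b Eb Hb t Ht) as U1.
  pose proof (ebis_dir_unit P1 P2 c Ec Hc t Ht) as U2.
  pose proof (ecross_edot_lagrange (ebis_dir t P3 P1) (ebis_dir t P1 P2)) as L.
  rewrite U1, U2, Rmult_1_r in L.
  unfold esector, eccw. rewrite sector_convex; [|apply ecross_ebis_dir_ebis_dir, Ht|exact L].
  rewrite edot_ebis_dir_ebis_dir, acos_opp by exact Ht. reflexivity.
Qed.

End EuclideanTriangle.

Lemma hray_unique Z Li Lj Lk r l e v : side_config Z Lj Lk r l -> e * e = 1 ->
  e * det3 Lj Lk Li < 0 -> hray Z Li Lj Lk v <-> v = hbis_dir e Z Lj Lk.
Proof.
  intros S He HeD. rewrite (hray_iff _ _ _ _ _ S). split.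
  - intros (e' & He' & He'D & ->). rewrite (sign_unique e e' _ He He' HeD He'D). reflexivity.
  - intros ->. exists e. auto.
Qed.

Lemma eray_unique O Pi Pj Pk l t u : edist Pj Pk = l -> 0 < l -> edist O Pj = edist O Pk ->
  t * t = 1 -> t * orient Pj Pk Pi < 0 -> eray O Pi Pj Pk u <-> u = ebis_dir t Pj Pk.
Proof.
  intros Hl Hl0 HO Ht HtE. rewrite (eray_iff O Pj Pk l Hl Hl0 HO). split.
  - intros (t' & Ht' & Ht'E & ->). rewrite (sign_unique t t' _ Ht Ht' HtE Ht'E). reflexivity.
  - intros ->. exists t. auto.
Qed.

Lemma hray_sectors Z L1 L2 L3 r l1 l2 l3 : equi_config Z L1 L2 L3 r l1 l2 l3 ->
  (exists v1 v2 v3, hray Z L1 L2 L3 v1 /\ hray Z L2 L3 L1 v2 /\ hray Z L3 L1 L2 v3) /\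
  (forall v1 v2 v3, hray Z L1 L2 L3 v1 -> hray Z L2 L3 L1 v2 -> hray Z L3 L1 L2 v3 ->
     hsector Z v1 v2 v3 = sector_angle l1 l2 l3 /\ hsector Z v2 v3 v1 = sector_angle l2 l3 l1 /\
     hsector Z v3 v1 v2 = sector_angle l3 l1 l2).
Proof.
  intro C. pose proof C as [S1 [S2 S3]].
  pose proof (equi_config_rot _ _ _ _ _ _ _ _ C) as C'.
  pose proof (equi_config_rot _ _ _ _ _ _ _ _ C') as C''.
  destruct (sign_choice _ (det3_config_neq0 _ _ _ _ _ _ _ _ C)) as (e & He & HeD).
  assert (HeD' : e * det3 L3 L1 L2 < 0) by (rewrite <- det3_cycle; exact HeD).
  assert (HeD'' : e * det3 L1 L2 L3 < 0) by (rewrite det3_cycle; exact HeD).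
  pose proof (fun v => hray_unique _ _ _ _ _ _ e v S1 He HeD) as R1.
  pose proof (fun v => hray_unique _ _ _ _ _ _ e v S2 He HeD') as R2.
  pose proof (fun v => hray_unique _ _ _ _ _ _ e v S3 He HeD'') as R3.
  split.
  - exists (hbis_dir e Z L2 L3), (hbis_dir e Z L3 L1), (hbis_dir e Z L1 L2).
    rewrite R1, R2, R3. auto.
  - intros v1 v2 v3 H1 H2 H3. rewrite R1 in H1. rewrite R2 in H2. rewrite R3 in H3. subst.
    split; [|split]; eapply hsector_hbis_dir; eassumption.
Qed.

Lemma eray_sectors O P1 P2 P3 a b c : tri_ineq a b c -> eucl_triangle P1 P2 P3 a b c ->
  circumcenter O P1 P2 P3 ->
  (exists u1 u2 u3, eray O P1 P2 P3 u1 /\ eray O P2 P3 P1 u2 /\ eray O P3 P1 P2 u3) /\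
  (forall u1 u2 u3, eray O P1 P2 P3 u1 -> eray O P2 P3 P1 u2 -> eray O P3 P1 P2 u3 ->
     esector u1 u2 u3 = sector_angle a b c /\ esector u2 u3 u1 = sector_angle b c a /\
     esector u3 u1 u2 = sector_angle c a b).
Proof.
  intros T Htri [HO1 HO2]. pose proof T as (Ha & Hb & Hc & _). pose proof Htri as (Ea & Eb & Ec).
  assert (HE : orient P2 P3 P1 <> 0).
  { intro E. pose proof (orient_sq _ _ _ _ _ _ Htri) as E2. pose proof (heron_pos _ _ _ T).
    rewrite E in E2. lra. }
  destruct (sign_choice _ HE) as (t & Ht & HtE).
  assert (HtE' : t * orient P3 P1 P2 < 0).
  { replace (orient P3 P1 P2) with (orient P2 P3 P1) by (unfold orient, ecross, psub; simpl; ring).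
    exact HtE. }
  assert (HtE'' : t * orient P1 P2 P3 < 0).
  { replace (orient P1 P2 P3) with (orient P2 P3 P1) by (unfold orient, ecross, psub; simpl; ring).
    exact HtE. }
  pose proof (fun u => eray_unique O P1 P2 P3 a t u Ea Ha HO2 Ht HtE) as R1.
  pose proof (fun u => eray_unique O P2 P3 P1 b t u Eb Hb ltac:(congruence) Ht HtE') as R2.
  pose proof (fun u => eray_unique O P3 P1 P2 c t u Ec Hc HO1 Ht HtE'') as R3.
  split.
  - exists (ebis_dir t P2 P3), (ebis_dir t P3 P1), (ebis_dir t P1 P2).
    rewrite R1, R2, R3. auto.
  - intros u1 u2 u3 H1 H2 H3. rewrite R1 in H1. rewrite R2 in H2. rewrite R3 in H3. subst.
    pose proof (tri_ineq_rot _ _ _ T) as T'. pose proof (tri_ineq_rot _ _ _ T') as T''.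
    split; [|split]; apply esector_ebis_dir; try assumption; split; auto.
Qed.

(** * Realizable side lengths *)

Lemma equi_config_of_triangle L1 L2 L3 Z l1 l2 l3 : dec_triangle L1 L2 L3 ->
  equidistant Z L1 L2 L3 -> side_len L2 L3 l1 -> side_len L3 L1 l2 -> side_len L1 L2 l3 ->
  equi_config Z L1 L2 L3 (- mink Z L1) (lam l1) (lam l2) (lam l3).
Proof.
  intros (H1 & H2 & H3 & D12 & D23 & D31) (HZ & E12 & E23) S1 S2 S3.
  apply hsd_eq_iff in E12, E23; try assumption.
  pose proof (mink_hpoint_lightlike _ _ HZ H1).
  rewrite side_len_lam in S1, S2, S3 by (auto using mink_lightlike).
  pose proof (lam_pos l1). pose proof (lam_pos l2). pose proof (lam_pos l3).
  split; [|split]; constructor; auto; lra.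
Qed.

Lemma realizable_of_equi_config Z L1 L2 L3 r l1 l2 l3 :
  equi_config Z L1 L2 L3 r (lam l1) (lam l2) (lam l3) -> realizable l1 l2 l3.
Proof.
  intros [[HZ H2 H3 Z2 Z3 M23 Hr Hl1] [[_ _ H1 _ Z1 M31 _ Hl2] [_ _ _ _ _ M12 _ Hl3]]].
  assert (mink L1 L2 < 0) by nra. assert (mink L2 L3 < 0) by nra. assert (mink L3 L1 < 0) by nra.
  exists L1, L2, L3, Z. split; [|split; [|split; [|split]]].
  - do 3 (split; [assumption|]). split; [|split]; apply distinct_ideal_of_mink; auto; lra.
  - unfold equidistant, hsd. rewrite Z1, Z2, Z3. auto.
  - apply side_len_lam; assumption.
  - apply side_len_lam; assumption.
  - apply side_len_lam; assumption.
Qed.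

Lemma edist_of_sq p q x : 0 <= x -> edot (psub p q) (psub p q) = x * x -> edist p q = x.
Proof. intros Hx E. unfold edist. rewrite E. apply sqrt_square, Hx. Qed.

Lemma tri_ineq_circumscribed a b c : tri_ineq a b c ->
  exists P1 P2 P3 O, eucl_triangle P1 P2 P3 a b c /\ circumcenter O P1 P2 P3.
Proof.
  intro T. pose proof (heron_pos _ _ _ T) as HH. destruct T as (Ha & Hb & Hc & _).
  set (p := (b * b + c * c - a * a) / (2 * c)).
  assert (Hq2 : 0 < b * b - p * p)
    by (replace (b * b - p * p) with (heron a b c / (4 * c * c)) by (unfold p, heron; field; lra);
        apply Rdiv_lt_0_compat; nra).
  set (q := sqrt (b * b - p * p)).
  assert (Hq : 0 < q) by (apply sqrt_lt_R0, Hq2).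
  assert (Eq : q * q = b * b - p * p) by (apply sqrt_sqrt; lra).
  assert (Ep : 2 * c * p = b * b + c * c - a * a) by (unfold p; field; lra).
  (* the perpendicular bisectors of [P1 P2] and [P1 P3] meet at [O] *)
  set (y := (b * b - c * p) / (2 * q)).
  assert (Ey : 2 * q * y = b * b - c * p) by (unfold y; field; lra).
  exists (0, 0), (c, 0), (p, q), (c / 2, y). split; [split; [|split]|split];
    try apply edist_eq_iff; try apply edist_of_sq; unfold edot, psub; simpl; nra.
Qed.

(* Lifts the circle of radius [R] about [O] to the light cone. *)
Definition lift (O : pt2) (R : R) (P : pt2) : V3 :=
  vscale (sqrt 2) (mkV3 R (fst P - fst O) (snd P - snd O)).

Lemma mink_lift O R P Q : edist O P = R -> edist O Q = R ->
  mink (lift O R P) (lift O R Q) = - edot (psub P Q) (psub P Q).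
Proof.
  intros HP HQ. apply (f_equal (fun x => x * x)) in HP, HQ. rewrite <- edot_edist in HP, HQ.
  unfold lift. rewrite mink_vscale_l, mink_vscale_r, <- Rmult_assoc, sqrt_sqrt by lra.
  revert HP HQ. unfold mink, edot, psub; simpl. intros. nra.
Qed.

Lemma circumradius_pos O P Q R c : edist O P = R -> edist O Q = R -> edist P Q = c -> 0 < c ->
  0 < R.
Proof.
  intros HP HQ HPQ Hc.
  assert (0 <= R) by (rewrite <- HP; apply sqrt_pos).
  apply (f_equal (fun x => x * x)) in HP, HQ, HPQ. rewrite <- edot_edist in HP, HQ, HPQ.
  (* [c^2 = |P - Q|^2 <= 2 |O - P|^2 + 2 |O - Q|^2 = 4 R^2] *)
  assert (c * c <= 4 * (R * R)).
  { rewrite <- HPQ. replace (4 * (R * R)) with (2 * (R * R) + 2 * (R * R)) by ring.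
    rewrite <- HP at 1. rewrite <- HQ. unfold edot, psub; simpl.
    pose proof (pow2_ge_0 (2 * fst O - fst P - fst Q)).
    pose proof (pow2_ge_0 (2 * snd O - snd P - snd Q)). nra. }
  nra.
Qed.

Lemma lightlike_lift O R P : edist O P = R -> 0 < R -> lightlike (lift O R P).
Proof.
  intros HP HR. split.
  - rewrite mink_lift by assumption. unfold edot, psub; simpl; ring.
  - unfold lift; simpl. pose proof (sqrt_lt_R0 2 ltac:(lra)). nra.
Qed.

Lemma equi_config_of_tri_ineq a b c : tri_ineq a b c ->
  exists Z L1 L2 L3 r, equi_config Z L1 L2 L3 r a b c.
Proof.
  intro T. destruct (tri_ineq_circumscribed _ _ _ T) as (P1 & P2 & P3 & O & Htri & HO1 & HO2).
  pose proof T as (Ha & Hb & Hc & _). destruct Htri as (Ea & Eb & Ec).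
  set (R := edist O P1) in *.
  assert (D2 : edist O P2 = R) by (symmetry; exact HO1).
  assert (D3 : edist O P3 = R) by congruence.
  pose proof (circumradius_pos O P1 P2 R c eq_refl D2 Ec Hc) as HR.
  pose proof (sqrt_lt_R0 2 ltac:(lra)).
  set (Z := mkV3 1 0 0).
  assert (HZ : hpoint Z) by (unfold hpoint, mink, Z; simpl; split; lra).
  assert (HZL : forall P, mink Z (lift O R P) = - (sqrt 2 * R))
    by (intro P; unfold Z, lift, mink; simpl; ring).
  assert (HLL : forall P Q l, edist O P = R -> edist O Q = R -> edist P Q = l ->
                  mink (lift O R P) (lift O R Q) = - (l * l))
    by (intros P Q l HP HQ <-; rewrite mink_lift, edot_edist by assumption; reflexivity).
  exists Z, (lift O R P1), (lift O R P2), (lift O R P3), (sqrt 2 * R).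
  split; [|split]; constructor; auto using lightlike_lift; nra.
Qed.

Lemma realizable_iff l1 l2 l3 : realizable l1 l2 l3 <-> tri_ineq (lam l1) (lam l2) (lam l3).
Proof.
  split.
  - intros (L1 & L2 & L3 & Z & D & E & S1 & S2 & S3).
    exact (equi_config_tri_ineq _ _ _ _ _ _ _ _
             (equi_config_of_triangle _ _ _ _ _ _ _ D E S1 S2 S3)).
  - intro T. destruct (equi_config_of_tri_ineq _ _ _ T) as (Z & L1 & L2 & L3 & r & C).
    exact (realizable_of_equi_config _ _ _ _ _ _ _ _ C).
Qed.

Lemma tri_ineq_realizable m1 m2 m3 : tri_ineq m1 m2 m3 ->
  exists l1 l2 l3, realizable l1 l2 l3 /\ m1 = lam l1 /\ m2 = lam l2 /\ m3 = lam l3.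
Proof.
  intro T. pose proof T as (H1 & H2 & H3 & _).
  exists (ln (m1 * m1 / 2)), (ln (m2 * m2 / 2)), (ln (m3 * m3 / 2)).
  rewrite realizable_iff, !lam_ln_sq_half by assumption. auto.
Qed.

Lemma realizable_angles l1 l2 l3 : realizable l1 l2 l3 ->
  exists t1 t2 t3, angle_triple t1 t2 t3 /\ sine_rel l1 l2 l3 t1 t2 t3 /\
    forall s1 s2 s3, angle_triple s1 s2 s3 -> sine_rel l1 l2 l3 s1 s2 s3 ->
      s1 = t1 /\ s2 = t2 /\ s3 = t3.
Proof.
  rewrite realizable_iff. intro T. do 3 eexists.
  split; [apply angle_triple_sector_angle, T|]. split; [apply sine_rel_sector_angle, T|].
  intros s1 s2 s3. apply sector_angles_unique, T.
Qed.

Lemma sin_lt_sin_add t1 t2 t3 : angle_triple t1 t2 t3 -> sin t1 < sin t2 + sin t3.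
Proof.
  intros (A1 & A2 & A3 & S).
  replace t1 with ((PI - t2) + (PI - t3)) by lra.
  rewrite sin_plus, !sin_PI_x, !Rtrigo_facts.cos_pi_minus.
  pose proof (sin_gt_0 t2 ltac:(lra) ltac:(lra)). pose proof (sin_gt_0 t3 ltac:(lra) ltac:(lra)).
  assert (Hcos : forall t, 0 < t < PI -> - cos t < 1)
    by (intros t Ht; rewrite <- Rtrigo_facts.cos_pi_minus, <- cos_0; apply cos_decreasing_1; lra).
  pose proof (Hcos t2 ltac:(lra)). pose proof (Hcos t3 ltac:(lra)).
  nra.
Qed.

Lemma angle_triple_realizable t1 t2 t3 : angle_triple t1 t2 t3 ->
  exists l1 l2 l3, realizable l1 l2 l3 /\ sine_rel l1 l2 l3 t1 t2 t3.
Proof.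
  intro A. pose proof A as (A1 & A2 & A3 & S).
  pose proof (sin_gt_0 t1 ltac:(lra) ltac:(lra)). pose proof (sin_gt_0 t2 ltac:(lra) ltac:(lra)).
  pose proof (sin_gt_0 t3 ltac:(lra) ltac:(lra)).
  assert (Hexp : forall t, 0 < sin t -> sqrt (exp (ln (sin t * sin t))) = sin t)
    by (intros t Ht; rewrite exp_ln by nra; apply sqrt_square; lra).
  assert (Hlam : forall t, 0 < sin t -> lam (ln (sin t * sin t)) = sqrt 2 * sin t).
  { intros t Ht. transitivity (sqrt 2 * sqrt (exp (ln (sin t * sin t)))); [|rewrite Hexp; auto].
    rewrite sqrt_exp_lam. field. apply Rgt_not_eq, sqrt_lt_R0. lra. }
  exists (ln (sin t1 * sin t1)), (ln (sin t2 * sin t2)), (ln (sin t3 * sin t3)). split.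
  - rewrite realizable_iff, !Hlam by assumption.
    pose proof (sin_lt_sin_add _ _ _ A).
    pose proof (sin_lt_sin_add t2 t3 t1 ltac:(unfold angle_triple; lra)).
    pose proof (sin_lt_sin_add t3 t1 t2 ltac:(unfold angle_triple; lra)).
    assert (0 < sqrt 2) by (apply sqrt_lt_R0; lra).
    unfold tri_ineq. repeat split; nra.
  - unfold sine_rel. rewrite !Hexp by assumption. split; field; lra.
Qed.

Lemma cos_pi_sub_sector_angle a b c : tri_ineq a b c ->
  cos (PI - sector_angle a b c) = cos_angle a b c.
Proof.
  intro T. pose proof (cos_angle_bound _ _ _ T). unfold sector_angle.
  replace (PI - (PI - acos (cos_angle a b c))) with (acos (cos_angle a b c)) by ring.
  apply cos_acos. lra.
Qed.

Lemma equidistant_geometry (L1 L2 L3 Z : V3) (l1 l2 l3 : R) :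
  dec_triangle L1 L2 L3 -> equidistant Z L1 L2 L3 ->
  side_len L2 L3 l1 -> side_len L3 L1 l2 -> side_len L1 L2 l3 ->
  (exists v1 v2 v3, hray Z L1 L2 L3 v1 /\ hray Z L2 L3 L1 v2 /\ hray Z L3 L1 L2 v3) /\
  (forall v1 v2 v3, hray Z L1 L2 L3 v1 -> hray Z L2 L3 L1 v2 -> hray Z L3 L1 L2 v3 ->
     let t1 := hsector Z v1 v2 v3 in
     let t2 := hsector Z v2 v3 v1 in
     let t3 := hsector Z v3 v1 v2 in
     angle_triple t1 t2 t3 /\ sine_rel l1 l2 l3 t1 t2 t3 /\
     (exists P1 P2 P3 : pt2, eucl_triangle P1 P2 P3 (lam l1) (lam l2) (lam l3)) /\
     (forall (P1 P2 P3 O : pt2),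
        eucl_triangle P1 P2 P3 (lam l1) (lam l2) (lam l3) ->
        circumcenter O P1 P2 P3 ->
        (exists u1 u2 u3, eray O P1 P2 P3 u1 /\ eray O P2 P3 P1 u2 /\ eray O P3 P1 P2 u3) /\
        (forall u1 u2 u3, eray O P1 P2 P3 u1 -> eray O P2 P3 P1 u2 -> eray O P3 P1 P2 u3 ->
           esector u1 u2 u3 = t1 /\ esector u2 u3 u1 = t2 /\ esector u3 u1 u2 = t3)) /\
     (exists s1 s2 s3, bis_len Z L1 L2 L3 s1 /\ bis_len Z L2 L3 L1 s2 /\ bis_len Z L3 L1 L2 s3) /\
     (forall s, bis_len Z L1 L2 L3 s -> s = artanh (cos (PI - t1))) /\
     (forall s, bis_len Z L2 L3 L1 s -> s = artanh (cos (PI - t2))) /\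
     (forall s, bis_len Z L3 L1 L2 s -> s = artanh (cos (PI - t3)))).
Proof.
  intros D E S1 S2 S3.
  pose proof (equi_config_of_triangle _ _ _ _ _ _ _ D E S1 S2 S3) as C.
  pose proof (equi_config_rot _ _ _ _ _ _ _ _ C) as C'.
  pose proof (equi_config_rot _ _ _ _ _ _ _ _ C') as C''.
  pose proof (equi_config_tri_ineq _ _ _ _ _ _ _ _ C) as T.
  pose proof (tri_ineq_rot _ _ _ T) as T'. pose proof (tri_ineq_rot _ _ _ T') as T''.
  destruct (hray_sectors _ _ _ _ _ _ _ _ C) as [Hex Hsec]. split; [exact Hex|].
  intros v1 v2 v3 R1 R2 R3. destruct (Hsec v1 v2 v3 R1 R2 R3) as (-> & -> & ->). cbv zeta.
  rewrite !cos_pi_sub_sector_angle by assumption.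
  split; [apply angle_triple_sector_angle, T|]. split; [apply sine_rel_sector_angle, T|].
  split; [destruct (tri_ineq_circumscribed _ _ _ T) as (P1 & P2 & P3 & O & Ht & _); eauto|].
  split; [intros P1 P2 P3 O Ht Hc; apply eray_sectors; assumption|].
  setoid_rewrite (bis_len_iff _ _ _ _ _ _ _ _ C).
  setoid_rewrite (bis_len_iff _ _ _ _ _ _ _ _ C').
  setoid_rewrite (bis_len_iff _ _ _ _ _ _ _ _ C'').
  split; [do 3 eexists; repeat split|]. auto.
Qed.

Theorem proposition4 :
  (* (i) <-> (ii):  lambda_i = sqrt(2 e^{l_i}) *)
  (forall l1 l2 l3 : R,
     realizable l1 l2 l3 <-> tri_ineq (lam l1) (lam l2) (lam l3)) /\
  (forall m1 m2 m3 : R, tri_ineq m1 m2 m3 ->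
     exists l1 l2 l3, realizable l1 l2 l3 /\
       m1 = lam l1 /\ m2 = lam l2 /\ m3 = lam l3) /\
  (* (i) -> (iii): each realizable triple determines a unique angle triple *)
  (forall l1 l2 l3 : R, realizable l1 l2 l3 ->
     exists t1 t2 t3, angle_triple t1 t2 t3 /\ sine_rel l1 l2 l3 t1 t2 t3 /\
       forall s1 s2 s3, angle_triple s1 s2 s3 -> sine_rel l1 l2 l3 s1 s2 s3 ->
         s1 = t1 /\ s2 = t2 /\ s3 = t3) /\
  (* (iii) -> (i): surjective, and injective up to a common additive constant *)
  (forall t1 t2 t3 : R, angle_triple t1 t2 t3 ->
     exists l1 l2 l3, realizable l1 l2 l3 /\ sine_rel l1 l2 l3 t1 t2 t3) /\
  (forall t1 t2 t3 l1 l2 l3 k1 k2 k3 : R, angle_triple t1 t2 t3 ->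
     realizable l1 l2 l3 -> sine_rel l1 l2 l3 t1 t2 t3 ->
     realizable k1 k2 k3 -> sine_rel k1 k2 k3 t1 t2 t3 ->
     exists c, k1 = l1 + c /\ k2 = l2 + c /\ k3 = l3 + c) /\
  (* geometric meaning of the angles and bisector lengths *)
  (forall (L1 L2 L3 Z : V3) (l1 l2 l3 : R),
     dec_triangle L1 L2 L3 -> equidistant Z L1 L2 L3 ->
     side_len L2 L3 l1 -> side_len L3 L1 l2 -> side_len L1 L2 l3 ->
     (exists v1 v2 v3, hray Z L1 L2 L3 v1 /\ hray Z L2 L3 L1 v2 /\ hray Z L3 L1 L2 v3) /\
     (forall v1 v2 v3, hray Z L1 L2 L3 v1 -> hray Z L2 L3 L1 v2 -> hray Z L3 L1 L2 v3 ->
        let t1 := hsector Z v1 v2 v3 in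
        let t2 := hsector Z v2 v3 v1 in
        let t3 := hsector Z v3 v1 v2 in
        angle_triple t1 t2 t3 /\ sine_rel l1 l2 l3 t1 t2 t3 /\
        (* coincidence with the Euclidean angles at the circumcenter *)
        (exists P1 P2 P3 : pt2, eucl_triangle P1 P2 P3 (lam l1) (lam l2) (lam l3)) /\
        (forall (P1 P2 P3 O : pt2),
           eucl_triangle P1 P2 P3 (lam l1) (lam l2) (lam l3) ->
           circumcenter O P1 P2 P3 ->
           (exists u1 u2 u3, eray O P1 P2 P3 u1 /\ eray O P2 P3 P1 u2 /\ eray O P3 P1 P2 u3) /\
           (forall u1 u2 u3, eray O P1 P2 P3 u1 -> eray O P2 P3 P1 u2 -> eray O P3 P1 P2 u3 ->
              esector u1 u2 u3 = t1 /\ esector u2 u3 u1 = t2 /\ esector u3 u1 u2 = t3)) /\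
        (* signed bisector lengths *)
        (exists s1 s2 s3, bis_len Z L1 L2 L3 s1 /\ bis_len Z L2 L3 L1 s2 /\
                          bis_len Z L3 L1 L2 s3) /\
        (forall s, bis_len Z L1 L2 L3 s -> s = artanh (cos (PI - t1))) /\
        (forall s, bis_len Z L2 L3 L1 s -> s = artanh (cos (PI - t2))) /\
        (forall s, bis_len Z L3 L1 L2 s -> s = artanh (cos (PI - t3))))).
Proof.
  split; [exact realizable_iff|].
  split; [exact tri_ineq_realizable|].
  split; [exact realizable_angles|].
  split; [exact angle_triple_realizable|].
  split; [|exact equidistant_geometry].
  intros t1 t2 t3 l1 l2 l3 k1 k2 k3 A _ Rl _ Rk. exact (sine_rel_shift _ _ _ _ _ _ _ _ _ A Rl Rk).
Qed.
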